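(* Let $g\in C^{\omega}(\mathbb{R})$ satisfy (G). Suppose $X_{\rm toy}\neq\emptyset$. If $\beta\in X_{\rm toy}$, then the toy tip solution $(\rho_\beta,r_\beta)$ is a toy steady tip growth solution.
   Context: Condition (G) on real-analytic $g:\mathbb{R}\to\mathbb{R}$: $g(v)>0$, $g'(v)\ge0$, $\frac{d^2}{dv^2}(v^2g(v^2))>0$ for all $v>0$, and $\lim_{v\to\infty}v g(v^2)=\infty$. Toy model: $\rho'=\frac32\frac{1-\rho^2}{r}\Big(-1+\frac{\sqrt{1-\rho^2}(\beta r^2g(r^2)+\rho)}{r}\Big)$, $r'=\rho$ (prime $=d/ds$) on $M_0=(-1,1)\times\mathbb{R}_{>0}$. For a solution on $(0,s_{\max})$: (S1) $\lim_{s\to0^+}\rho=1$, $\lim r=0$, $\lim\sqrt{1-\rho^2}/r=\eta_0>0$; (S2) there exist $s_0>0$ and real-analytic $G:(-a,a)\to\mathbb{R}_{>0}$, $a=r(s_0)^2$, with $\rho(s)=G(r(s)^2)$ on $(0,s_0)$; (S3) defined on $(0,\infty)$ with $\rho'<0,\rho>0$ for all $s>0$; (S4) $\lim_{s\to\infty}\rho=0$, $\lim_{s\to\infty} r=r_\infty>0$. A toy steady tip growth solution satisfies (S1)–(S4). A toy tip solution satisfies (S1), (S2) and $\rho'<0,\rho>0$ on some $(0,s_0)$, $s_0>0$. For each $\beta\ge0$ there is a unique maximal toy tip solution, denoted $(\rho_\beta,r_\beta)$. Sets: $A_{\rm toy}=\{\beta>0:\exists s_0>0,\ \rho_\beta(s)\rho_\beta'(s)<0\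 \forall s\in(0,s_0),\ \rho_\beta(s_0)=0\}$; $B_{\rm toy}=\{\beta>0:\exists s_0>0,\ \rho_\beta(s)\rho_\beta'(s)<0\ \forall s\in(0,s_0),\ \rho_\beta'(s_0)=0\}$; $X_{\rm toy}=\mathbb{R}_{>0}\setminus(A_{\rm toy}\cup B_{\rm toy})$. *)

From Stdlib Require Import Reals Lra.
Open Scope R_scope.

Definition analytic_on (P : R -> Prop) (f : R -> R) : Prop :=
  forall x0, P x0 ->
    exists rad, 0 < rad /\
    exists a : nat -> R,
      forall x, Rabs (x - x0) < rad -> P x ->
        infinite_sum (fun n => a n * (x - x0) ^ n) (f x).

Definition second_deriv_at (f : R -> R) (v l : R) : Prop :=
  exists f1 : R -> R,
    (exists eps, 0 < eps /\
       forall w, Rabs (w - v) < eps -> derivable_pt_lim f w (f1 w)) /\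
    derivable_pt_lim f1 v l.

Definition condG (g : R -> R) : Prop :=
  (forall v, 0 < v -> 0 < g v) /\
  (forall v, 0 < v -> exists l, derivable_pt_lim g v l /\ 0 <= l) /\
  (forall v, 0 < v -> exists l,
       second_deriv_at (fun w => w ^ 2 * g (w ^ 2)) v l /\ 0 < l) /\
  (forall M, exists V, forall v, V < v -> M < v * g (v ^ 2)).

Definition toyF (g : R -> R) (beta rho r : R) : R :=
  3 / 2 * (1 - rho ^ 2) / r *
  (-1 + sqrt (1 - rho ^ 2) * (beta * r ^ 2 * g (r ^ 2) + rho) / r).

(** Right endpoint s_max of the existence interval: [Some m] = m, [None] = +infinity. *)
Definition in_dom (smax : option R) (s : R) : Prop :=
  0 < s /\ match smax with Some m => s < m | None => True end.

Definition toy_solution (g : R -> R) (beta : R) (rho r : R -> R)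
    (smax : option R) : Prop :=
  forall s, in_dom smax s ->
    -1 < rho s < 1 /\ 0 < r s /\
    derivable_pt_lim rho s (toyF g beta (rho s) (r s)) /\
    derivable_pt_lim r s (rho s).

Definition lim_0plus (f : R -> R) (L : R) : Prop :=
  forall eps, 0 < eps -> exists delta, 0 < delta /\
    forall s, 0 < s < delta -> Rabs (f s - L) < eps.

Definition lim_infty (f : R -> R) (L : R) : Prop :=
  forall eps, 0 < eps -> exists S, forall s, S < s -> Rabs (f s - L) < eps.

Definition S1 (rho r : R -> R) : Prop :=
  lim_0plus rho 1 /\ lim_0plus r 0 /\
  exists eta0, 0 < eta0 /\ lim_0plus (fun s => sqrt (1 - rho s ^ 2) / r s) eta0.

Definition S2 (rho r : R -> R) (smax : option R) : Prop :=
  exists s0, in_dom smax s0 /\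
    let a := r s0 ^ 2 in
    exists G : R -> R,
      analytic_on (fun x => - a < x < a) G /\
      (forall x, - a < x < a -> 0 < G x) /\
      (forall s, 0 < s < s0 -> rho s = G (r s ^ 2)).

Definition S3 (rho r : R -> R) (smax : option R) : Prop :=
  smax = None /\
  forall s, 0 < s ->
    (exists l, derivable_pt_lim rho s l /\ l < 0) /\ 0 < rho s.

Definition S4 (rho r : R -> R) : Prop :=
  lim_infty rho 0 /\ exists rinf, 0 < rinf /\ lim_infty r rinf.

Definition toy_steady_tip_growth (g : R -> R) (beta : R) (rho r : R -> R)
    (smax : option R) : Prop :=
  toy_solution g beta rho r smax /\
  S1 rho r /\ S2 rho r smax /\ S3 rho r smax /\ S4 rho r.

Definition toy_tip_solution (g : R -> R) (beta : R) (rho r : R -> R)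
    (smax : option R) : Prop :=
  toy_solution g beta rho r smax /\
  S1 rho r /\ S2 rho r smax /\
  exists s0, in_dom smax s0 /\
    forall s, 0 < s < s0 ->
      (exists l, derivable_pt_lim rho s l /\ l < 0) /\ 0 < rho s.

Definition maximal_toy_tip_solution (g : R -> R) (beta : R) (rho r : R -> R)
    (smax : option R) : Prop :=
  toy_tip_solution g beta rho r smax /\
  forall rho2 r2 smax2,
    toy_tip_solution g beta rho2 r2 smax2 ->
    (forall s, in_dom smax s -> in_dom smax2 s /\ rho2 s = rho s /\ r2 s = r s) ->
    forall s, in_dom smax2 s -> in_dom smax s.

Definition A_cond (rho : R -> R) (smax : option R) : Prop :=
  exists s0, in_dom smax s0 /\
    (forall s, 0 < s < s0 ->
       exists l, derivable_pt_lim rho s l /\ rho s * l < 0) /\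
    rho s0 = 0.

Definition B_cond (rho : R -> R) (smax : option R) : Prop :=
  exists s0, in_dom smax s0 /\
    (forall s, 0 < s < s0 ->
       exists l, derivable_pt_lim rho s l /\ rho s * l < 0) /\
    derivable_pt_lim rho s0 0.

(** beta in X_toy := R_{>0} \ (A_toy u B_toy), with (rho_beta, r_beta) the
    maximal toy tip solution. *)
Definition in_X_toy (g : R -> R) (beta : R) : Prop :=
  0 < beta /\
  forall rho r smax, maximal_toy_tip_solution g beta rho r smax ->
    ~ A_cond rho smax /\ ~ B_cond rho smax.

From Stdlib Require Import Reals Lra Lia.
From Coquelicot Require Import Coquelicot.
Open Scope R_scope.

(* On a toy tip solution rho > 0 and rho' < 0 near s = 0, and these can only be lost at a first
   point where rho = 0 or rho' = 0, i.e. when beta lies in A_toy or B_toy. For beta in X_toy they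
   hold on the whole existence interval, so rho decreases and r increases with 0 < r' = rho < 1.
   If s_max were finite, the monotone limits of rho and r at s_max would lie in M_0, where the
   right-hand side is locally Lipschitz (by (G), (v^2 g(v^2))' is monotone); a Picard solution
   started at that point extends the solution, contradicting maximality. So s_max = oo. For
   s >= 1, rho' < 0 needs sqrt(1 - rho(1)^2) beta r g(r^2) < 1, so the growth condition in (G)
   bounds r; a bounded increasing r with r' = rho then forces rho -> 0 and r -> r_oo > 0. *)

Lemma lipschitz_continuous (f : R -> R) K : 0 <= K ->
  (forall u v, Rabs (f u - f v) <= K * Rabs (u - v)) -> forall z, continuous f z.
Proof.
  intros HK Hf z. apply continuity_pt_filterlim. intros eps Heps.
  exists (eps / (K + 1)). split; [apply Rdiv_lt_0_compat; lra|].
  intros x [_ Hx]. simpl in *. unfold Rdist in *.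
  apply Rle_lt_trans with ((K + 1) * Rabs (x - z)).
  - eapply Rle_trans; [apply Hf|]. apply Rmult_le_compat_r; [apply Rabs_pos|lra].
  - apply Rmult_lt_reg_l with (/ (K + 1)); [apply Rinv_0_lt_compat; lra|].
    rewrite <- Rmult_assoc, Rinv_l, Rmult_1_l by lra. unfold Rdiv in Hx. lra.
Qed.

Section IntegralOfContinuous.

Variable f : R -> R.
Hypothesis f_cont : forall z, continuous f z.

Lemma ex_RInt_cont a b : ex_RInt f a b.
Proof. apply (@ex_RInt_continuous R_CompleteNormedModule). intros; apply f_cont. Qed.

Lemma RInt_Chasles_cont a b c : RInt f a b + RInt f b c = RInt f a c.
Proof. apply (RInt_Chasles f a b c); apply ex_RInt_cont. Qed.

Lemma abs_RInt_le_const_abs M x y :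
  (forall u, Rmin x y <= u <= Rmax x y -> Rabs (f u) <= M) ->
  Rabs (RInt f x y) <= M * Rabs (y - x).
Proof.
  intros Hb. destruct (Rle_dec x y) as [Hxy|Hxy].
  - rewrite (Rabs_right (y - x)), Rmult_comm by lra.
    apply abs_RInt_le_const; [lra | apply ex_RInt_cont | intros; apply Hb].
    rewrite Rmin_left, Rmax_right; lra.
  - rewrite <- opp_RInt_swap by apply ex_RInt_cont.
    change (opp (RInt f y x)) with (- RInt f y x).
    rewrite Rabs_Ropp, (Rabs_left (y - x)), Rmult_comm by lra.
    replace (- (y - x)) with (x - y) by ring.
    apply abs_RInt_le_const; [lra | apply ex_RInt_cont | intros; apply Hb].
    rewrite Rmin_right, Rmax_left; lra.
Qed.

End IntegralOfContinuous.

Lemma RInt_minus_cont (f g : R -> R) a b :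
  (forall z, continuous f z) -> (forall z, continuous g z) ->
  RInt (fun u => f u - g u) a b = RInt f a b - RInt g a b.
Proof.
  intros Hf Hg. apply (RInt_minus f g); apply ex_RInt_cont; auto.
Qed.

Lemma abs_RInt_minus_le (f g : R -> R) e c :
  (forall z, continuous f z) -> (forall z, continuous g z) ->
  (forall u, Rabs (f u - g u) <= e) -> Rabs (RInt f 0 c - RInt g 0 c) <= e * Rabs c.
Proof.
  intros Hf Hg H. rewrite <- RInt_minus_cont by auto.
  replace (Rabs c) with (Rabs (c - 0)) by (f_equal; ring).
  apply abs_RInt_le_const_abs; auto.
  intros z. apply (continuous_minus f g z); auto.
Qed.

Lemma derivable_pt_lim_local (f g : R -> R) x l : derivable_pt_lim f x l ->
  (exists e, 0 < e /\ forall y, Rabs (y - x) < e -> g y = f y) -> derivable_pt_lim g x l.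
Proof.
  intros Hf (e & He & Hg) eps Heps. destruct (Hf eps Heps) as [d Hd].
  assert (Hm : 0 < Rmin d e) by (apply Rmin_pos; [apply cond_pos|auto]).
  exists (mkposreal _ Hm). intros h Hh0 Hh. simpl in Hh.
  pose proof (Rmin_l d e). pose proof (Rmin_r d e).
  rewrite (Hg (x + h)), (Hg x).
  - apply Hd; auto; lra.
  - rewrite Rminus_diag, Rabs_R0. auto.
  - replace (x + h - x) with h by ring. lra.
Qed.

Lemma derivable_pt_lim_of_little_o f x l :
  (forall eps, 0 < eps -> exists d, 0 < d /\ forall h, h <> 0 -> Rabs h < d ->
     Rabs (f (x + h) - f x - h * l) <= eps * Rabs h) ->
  derivable_pt_lim f x l.
Proof.
  intros H eps Heps. destruct (H (eps / 2) ltac:(lra)) as (d & Hd & Hh).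
  exists (mkposreal d Hd). intros h Hh0 Hhd. specialize (Hh h Hh0 Hhd).
  replace ((f (x + h) - f x) / h - l) with ((f (x + h) - f x - h * l) / h) by (field; auto).
  unfold Rdiv. rewrite Rabs_mult, Rabs_inv.
  pose proof (Rabs_pos_lt h Hh0).
  apply Rle_lt_trans with (eps / 2 * Rabs h * / Rabs h).
  - apply Rmult_le_compat_r; auto. apply Rlt_le, Rinv_0_lt_compat; auto.
  - field_simplify; lra.
Qed.

Lemma quadratic_le_eps K h eps : 0 <= K -> 0 < eps -> Rabs h < eps / (K + 1) ->
  K * h ^ 2 <= eps * Rabs h.
Proof.
  intros HK He Hh. rewrite <- (pow2_abs h). pose proof (Rabs_pos h).
  assert (Rabs h * (K + 1) < eps).
  { apply Rmult_lt_reg_r with (/ (K + 1)); [apply Rinv_0_lt_compat; lra|].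
    rewrite Rmult_assoc, Rinv_r, Rmult_1_r by lra. auto. }
  nra.
Qed.

Lemma continuity_pt_abs_lt f x : continuity_pt f x ->
  forall eps, 0 < eps -> exists d, 0 < d /\ forall y, Rabs (y - x) < d -> Rabs (f y - f x) < eps.
Proof.
  intros Hc eps Heps. destruct (Hc eps Heps) as (d & Hd & H). exists d. split; auto. intros y Hy.
  destruct (Req_dec y x) as [->|Ne].
  - rewrite Rminus_diag, Rabs_R0. auto.
  - apply (H y). repeat split; auto.
Qed.

Lemma continuity_pt_of_abs_lt f x :
  (forall eps, 0 < eps -> exists d, 0 < d /\ forall y, Rabs (y - x) < d -> Rabs (f y - f x) < eps) ->
  continuity_pt f x.
Proof.
  intros H eps Heps. destruct (H eps Heps) as (d & Hd & Hf). exists d. split; auto.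
  intros y [_ Hy]. apply Hf. apply Hy.
Qed.

Lemma continuity_pt_pos_near f x : continuity_pt f x -> 0 < f x ->
  exists d, 0 < d /\ forall y, Rabs (y - x) < d -> 0 < f y.
Proof.
  intros Hc Hx. destruct (continuity_pt_abs_lt f x Hc (f x) Hx) as (d & Hd & H).
  exists d. split; auto. intros y Hy. specialize (H y Hy). apply Rabs_def2 in H. lra.
Qed.

Lemma continuity_pt_nonneg_of_left f x : continuity_pt f x -> 0 < x ->
  (forall s, 0 < s < x -> 0 < f s) -> 0 <= f x.
Proof.
  intros Hc Hx Hpos. destruct (Rle_dec 0 (f x)) as [|Hneg]; auto. exfalso.
  destruct (continuity_pt_abs_lt f x Hc (- f x) ltac:(lra)) as (d & Hd & H).
  set (s := x - Rmin (d / 2) (x / 2)).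
  pose proof (Rmin_pos (d / 2) (x / 2) ltac:(lra) ltac:(lra)).
  pose proof (Rmin_l (d / 2) (x / 2)). pose proof (Rmin_r (d / 2) (x / 2)).
  specialize (Hpos s ltac:(unfold s; lra)).
  specialize (H s ltac:(unfold s; rewrite Rabs_left; lra)). apply Rabs_def2 in H. lra.
Qed.

Lemma sup_approx (f : R -> R) (D : R -> Prop) hi x0 : D x0 -> (forall s, D s -> f s <= hi) ->
  exists l, l <= hi /\ (forall s, D s -> f s <= l) /\
    (forall eps, 0 < eps -> exists s, D s /\ l - eps < f s).
Proof.
  intros H0 Hb.
  destruct (completeness (fun x => exists s, D s /\ x = f s)) as [l [Hl1 Hl2]].
  - exists hi. intros x (s & Hs & ->). auto.
  - exists (f x0). eauto.
  - exists l. split; [|split].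
    + apply Hl2. intros x (s & Hs & ->). auto.
    + intros s Hs. apply Hl1. eauto.
    + intros eps Heps. apply Classical_Prop.NNPP. intros Hn.
      assert (l <= l - eps); [|lra]. apply Hl2. intros x (s & Hs & ->).
      destruct (Rle_dec (f s) (l - eps)); auto. exfalso. apply Hn. exists s. split; auto. lra.
Qed.

Lemma inf_approx (f : R -> R) (D : R -> Prop) lo x0 : D x0 -> (forall s, D s -> lo <= f s) ->
  exists l, lo <= l /\ (forall s, D s -> l <= f s) /\
    (forall eps, 0 < eps -> exists s, D s /\ f s < l + eps).
Proof.
  intros H0 Hb. destruct (sup_approx (fun s => - f s) D (- lo) x0 H0) as (l & H1 & H2 & H3).
  { intros s Hs. specialize (Hb s Hs). lra. }
  exists (- l). split; [lra|split].
  - intros s Hs. specialize (H2 s Hs). lra.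
  - intros eps He. destruct (H3 eps He) as (s & Hs & Hf). exists s. split; auto. lra.
Qed.

(** * Geometric convergence *)

Lemma pow_half_pos n : 0 < (/ 2) ^ n.
Proof. apply pow_lt; lra. Qed.

Lemma geometric_telescope (u : nat -> R) C :
  (forall n, Rabs (u (S n) - u n) <= C * (/ 2) ^ n) ->
  forall n j, Rabs (u (n + j)%nat - u n) <= 2 * C * (/ 2) ^ n - 2 * C * (/ 2) ^ (n + j).
Proof.
  intros H n j. induction j as [|j IH].
  - rewrite Nat.add_0_r, !Rminus_diag, Rabs_R0. lra.
  - replace (n + S j)%nat with (S (n + j)) by lia.
    replace (u (S (n + j)) - u n)
      with ((u (S (n + j)) - u (n + j)%nat) + (u (n + j)%nat - u n)) by ring.
    eapply Rle_trans; [apply Rabs_triang|].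
    pose proof (H (n + j)%nat). simpl pow. lra.
Qed.

Lemma Un_cv_abs_le (u : nat -> R) l c e N : Un_cv u l ->
  (forall m, (N <= m)%nat -> Rabs (u m - c) <= e) -> Rabs (l - c) <= e.
Proof.
  intros Hu Hb. destruct (Rle_dec (Rabs (l - c)) e) as [H|H]; auto. exfalso.
  destruct (Hu (Rabs (l - c) - e)) as [N1 HN1]; [lra|].
  specialize (HN1 (max N N1) ltac:(lia)). specialize (Hb (max N N1) ltac:(lia)).
  unfold Rdist in HN1. rewrite Rabs_minus_sym in HN1.
  pose proof (Rabs_triang (u (max N N1) - c) (l - u (max N N1))) as T.
  replace (u (max N N1) - c + (l - u (max N N1))) with (l - c) in T by ring. lra.
Qed.

Lemma eq_0_of_le_geometric x C : (forall n, Rabs x <= C * (/ 2) ^ n) -> x = 0.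
Proof.
  intros H. destruct (Req_dec x 0) as [|Hx]; auto. exfalso.
  pose proof (Rabs_pos_lt x Hx) as Hpos.
  pose proof (H 0%nat) as H0. simpl in H0. rewrite Rmult_1_r in H0.
  destruct (pow_lt_1_zero (/ 2) ltac:(rewrite Rabs_right; lra) (Rabs x / C)) as [N HN].
  { apply Rdiv_lt_0_compat; lra. }
  specialize (HN N (le_n N)). specialize (H N).
  rewrite Rabs_right in HN by (apply Rle_ge, pow_le; lra).
  apply (Rmult_lt_compat_l C) in HN; [|lra].
  replace (C * (Rabs x / C)) with (Rabs x) in HN by (field; lra). lra.
Qed.

Lemma eq_of_geometric_sandwich x y (z : nat -> R) C :
  (forall n, Rabs (x - z n) <= C * (/ 2) ^ n) -> (forall n, Rabs (z n - y) <= C * (/ 2) ^ n) ->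
  x = y.
Proof.
  intros Hx Hy. apply Rminus_diag_uniq, (eq_0_of_le_geometric _ (2 * C)). intros n.
  replace (x - y) with ((x - z n) + (z n - y)) by ring.
  eapply Rle_trans; [apply Rabs_triang|]. pose proof (Hx n). pose proof (Hy n). lra.
Qed.

Lemma geometric_Cauchy_limit (u : nat -> R) C : 0 <= C ->
  (forall n, Rabs (u (S n) - u n) <= C * (/ 2) ^ n) ->
  Un_cv u (real (Lim_seq u)) /\ forall n, Rabs (real (Lim_seq u) - u n) <= 2 * C * (/ 2) ^ n.
Proof.
  intros HC H. pose proof (geometric_telescope u C H) as T.
  assert (Hc : ex_lim_seq_cauchy u).
  { intros eps.
    destruct (pow_lt_1_zero (/ 2) ltac:(rewrite Rabs_right; lra) (eps / (2 * C + 1))) as [N HN].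
    { apply Rdiv_lt_0_compat; [apply cond_pos|lra]. }
    exists N.
    assert (Hk : forall p q, (N <= p)%nat -> (p <= q)%nat -> Rabs (u q - u p) < eps).
    { intros p q Hp Hq. replace q with (p + (q - p))%nat by lia.
      eapply Rle_lt_trans; [apply T|].
      pose proof (pow_half_pos (p + (q - p))). pose proof (pow_half_pos p).
      specialize (HN p Hp). rewrite Rabs_right in HN by lra.
      apply Rle_lt_trans with ((2 * C + 1) * (/ 2) ^ p); [nra|].
      apply Rmult_lt_reg_l with (/ (2 * C + 1)); [apply Rinv_0_lt_compat; lra|].
      rewrite <- Rmult_assoc, Rinv_l, Rmult_1_l by lra.
      unfold Rdiv in HN. pose proof (cond_pos eps). nra. }
    intros n m Hn Hm. destruct (Nat.le_gt_cases n m).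
    - rewrite Rabs_minus_sym. apply Hk; auto.
    - apply Hk; auto; lia. }
  pose proof (Lim_seq_correct' u (proj2 (ex_lim_seq_cauchy_corr u) Hc)) as Hl.
  apply is_lim_seq_Reals in Hl. split; auto.
  intros n. apply (Un_cv_abs_le u _ _ _ n Hl).
  intros m Hm. replace m with (n + (m - n))%nat by lia.
  eapply Rle_trans; [apply T|]. pose proof (pow_half_pos (n + (m - n))). nra.
Qed.

(** * Picard iteration for planar systems *)

Definition clamp d t := Rmax 0 (Rmin d t).

Lemma clamp_range d t : 0 <= d -> 0 <= clamp d t <= d.
Proof. intros. unfold clamp, Rmax, Rmin. repeat destruct Rle_dec; lra. Qed.

Lemma clamp_lipschitz d t s : 0 <= d -> Rabs (clamp d t - clamp d s) <= Rabs (t - s).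
Proof.
  intros. unfold clamp, Rmax, Rmin, Rabs. repeat destruct Rle_dec; repeat destruct Rcase_abs; lra.
Qed.

Lemma clamp_id d t : 0 <= t <= d -> clamp d t = t.
Proof. intros. unfold clamp, Rmax, Rmin. repeat destruct Rle_dec; lra. Qed.

Definition box_lipschitz (F : R -> R -> R) (a b k M L : R) : Prop :=
  forall p q p' q', Rabs (p - a) <= k -> Rabs (q - b) <= k ->
    Rabs (p' - a) <= k -> Rabs (q' - b) <= k ->
    Rabs (F p q) <= M /\ Rabs (F p q - F p' q') <= L * Rmax (Rabs (p - p')) (Rabs (q - q')).

Definition box_path (a b k M : R) (P Q : R -> R) : Prop :=
  forall t s, Rabs (P t - a) <= k /\ Rabs (Q t - b) <= k /\
    Rabs (P t - P s) <= M * Rabs (t - s) /\ Rabs (Q t - Q s) <= M * Rabs (t - s).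

(* Integrating up to [clamp d t] defines the Picard operator on all of R, although only [0, d]
   matters; this keeps every iterate globally bounded and Lipschitz. *)
Definition picard_op (F : R -> R -> R) (c d : R) (P Q : R -> R) (t : R) : R :=
  c + RInt (fun u => F (P u) (Q u)) 0 (clamp d t).

Section PicardOperator.

Variables (F : R -> R -> R) (a b k M L d : R).
Hypotheses (M_ge0 : 0 <= M) (L_ge0 : 0 <= L) (d_ge0 : 0 <= d)
  (F_box : box_lipschitz F a b k M L).

Lemma box_path_comp P Q : box_path a b k M P Q ->
  (forall u, Rabs (F (P u) (Q u)) <= M) /\
  (forall u v, Rabs (F (P u) (Q u) - F (P v) (Q v)) <= L * M * Rabs (u - v)) /\
  (forall z, continuous (fun u => F (P u) (Q u)) z).
Proof.
  intros HPQ.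
  assert (Hlip : forall u v, Rabs (F (P u) (Q u) - F (P v) (Q v)) <= L * M * Rabs (u - v)).
  { intros u v. destruct (HPQ u v) as (H1 & H2 & H3 & H4). destruct (HPQ v u) as (H5 & H6 & _).
    destruct (F_box _ _ _ _ H1 H2 H5 H6) as [_ HF]. eapply Rle_trans; [apply HF|].
    rewrite Rmult_assoc. apply Rmult_le_compat_l; auto. apply Rmax_lub; auto. }
  split; [|split; auto].
  - intros u. destruct (HPQ u u) as (H1 & H2 & _). apply (F_box _ _ _ _ H1 H2 H1 H2).
  - apply (lipschitz_continuous _ (L * M)); auto. apply Rmult_le_pos; auto.
Qed.

Lemma picard_op_box c P Q : M * d <= k -> box_path a b k M P Q ->
  forall t s, Rabs (picard_op F c d P Q t - c) <= k /\
    Rabs (picard_op F c d P Q t - picard_op F c d P Q s) <= M * Rabs (t - s).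
Proof.
  intros HMd HPQ t s. destruct (box_path_comp P Q HPQ) as (Hb & _ & Hc).
  unfold picard_op. split.
  - rewrite Rplus_minus_l.
    eapply Rle_trans; [apply abs_RInt_le_const_abs; auto|].
    destruct (clamp_range d t d_ge0). rewrite Rminus_0_r, Rabs_right by lra.
    apply Rle_trans with (M * d); auto. apply Rmult_le_compat_l; lra.
  - rewrite <- (RInt_Chasles_cont (fun u => F (P u) (Q u)) Hc 0 (clamp d s) (clamp d t)).
    rewrite Rminus_plus_l_l, Rplus_minus_l.
    eapply Rle_trans; [apply abs_RInt_le_const_abs; auto|].
    apply Rmult_le_compat_l; auto. apply clamp_lipschitz; auto.
Qed.

Lemma picard_op_contraction c P Q P' Q' e : box_path a b k M P Q -> box_path a b k M P' Q' ->
  (forall u, Rabs (P' u - P u) <= e /\ Rabs (Q' u - Q u) <= e) ->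
  forall t, Rabs (picard_op F c d P' Q' t - picard_op F c d P Q t) <= L * e * d.
Proof.
  intros HPQ HPQ' He t.
  destruct (box_path_comp P Q HPQ) as (_ & _ & Hc). destruct (box_path_comp P' Q' HPQ') as (_ & _ & Hc').
  unfold picard_op. rewrite Rminus_plus_l_l.
  eapply Rle_trans; [apply (abs_RInt_minus_le _ _ (L * e)); auto|].
  - intros u. destruct (HPQ u u) as (H1 & H2 & _). destruct (HPQ' u u) as (H3 & H4 & _).
    destruct (F_box _ _ _ _ H3 H4 H1 H2) as [_ HF]. eapply Rle_trans; [apply HF|].
    apply Rmult_le_compat_l; auto. apply Rmax_lub; apply He.
  - destruct (clamp_range d t d_ge0). rewrite Rabs_right by lra.
    assert (0 <= e) by (destruct (He 0) as [He0 _]; pose proof (Rabs_pos (P' 0 - P 0)); lra).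
    apply Rmult_le_compat_l; [apply Rmult_le_pos|]; lra.
Qed.

(* Solutions of the integral equation are C^1 with derivative F(P, Q), in this quantitative form. *)
Lemma picard_op_taylor c P Q X : box_path a b k M P Q ->
  (forall t, X t = picard_op F c d P Q t) ->
  forall x y, 0 <= x <= d -> 0 <= y <= d ->
    Rabs (X y - X x - (y - x) * F (P x) (Q x)) <= L * M * (y - x) ^ 2.
Proof.
  intros HPQ Hfix x y Hx Hy. destruct (box_path_comp P Q HPQ) as (_ & Hlip & Hc).
  set (f := fun u => F (P u) (Q u)).
  assert (Hcst : forall z, continuous (fun _ : R => f x) z) by (intros; apply continuous_const).
  assert (Hdiff : X y - X x = RInt f x y).
  { rewrite (Hfix x), (Hfix y). unfold picard_op. rewrite !clamp_id by auto.
    fold f. rewrite <- (RInt_Chasles_cont f Hc 0 x y). ring. }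
  change (F (P x) (Q x)) with (f x). rewrite Hdiff.
  replace ((y - x) * f x) with (RInt (fun _ => f x) x y) by (rewrite RInt_const; reflexivity).
  rewrite <- (RInt_minus_cont f (fun _ => f x)) by auto.
  assert (Hrc : forall z, continuous (fun u => f u - f x) z).
  { intros z. apply (continuous_minus f (fun _ => f x) z); auto. }
  eapply Rle_trans; [apply (abs_RInt_le_const_abs _ Hrc (L * M * Rabs (y - x)))|].
  - intros u Hu. eapply Rle_trans; [apply Hlip|]. apply Rmult_le_compat_l.
    + apply Rmult_le_pos; auto.
    + unfold Rmin, Rmax in Hu. unfold Rabs. repeat destruct Rcase_abs; destruct Rle_dec; lra.
  - rewrite Rmult_assoc, <- Rabs_mult, Rabs_right; [right; ring|].
    apply Rle_ge, Rle_0_sqr.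
Qed.

End PicardOperator.

Fixpoint picard_iter (F1 F2 : R -> R -> R) (a b d : R) (n : nat) : (R -> R) * (R -> R) :=
  match n with
  | O => (fun _ => a, fun _ => b)
  | S n => let PQ := picard_iter F1 F2 a b d n in
      (picard_op F1 a d (fst PQ) (snd PQ), picard_op F2 b d (fst PQ) (snd PQ))
  end.

Section PicardIteration.

Variables (F1 F2 : R -> R -> R) (a b k M L d : R).
Hypotheses (M_ge0 : 0 <= M) (L_ge0 : 0 <= L) (d_ge0 : 0 <= d) (k_ge0 : 0 <= k)
  (Md_le : M * d <= k) (Ld_le : L * d <= / 2)
  (F1_box : box_lipschitz F1 a b k M L) (F2_box : box_lipschitz F2 a b k M L).

Let Pn n := fst (picard_iter F1 F2 a b d n).
Let Qn n := snd (picard_iter F1 F2 a b d n).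

Lemma picard_iter_box n : box_path a b k M (Pn n) (Qn n).
Proof.
  induction n as [|n IH].
  - intros t s. unfold Pn, Qn. simpl. rewrite !Rminus_diag, Rabs_R0.
    pose proof (Rabs_pos (t - s)). repeat split; nra.
  - intros t s.
    destruct (picard_op_box F1 a b k M L d M_ge0 L_ge0 d_ge0 F1_box a _ _ Md_le IH t s).
    destruct (picard_op_box F2 a b k M L d M_ge0 L_ge0 d_ge0 F2_box b _ _ Md_le IH t s).
    unfold Pn, Qn. simpl. tauto.
Qed.

Lemma picard_iter_step n t :
  Rabs (Pn (S n) t - Pn n t) <= k * (/ 2) ^ n /\ Rabs (Qn (S n) t - Qn n t) <= k * (/ 2) ^ n.
Proof.
  revert t. induction n as [|n IH]; intros t.
  - simpl pow. rewrite Rmult_1_r.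
    destruct (picard_op_box F1 a b k M L d M_ge0 L_ge0 d_ge0 F1_box a _ _ Md_le (picard_iter_box 0) t t).
    destruct (picard_op_box F2 a b k M L d M_ge0 L_ge0 d_ge0 F2_box b _ _ Md_le (picard_iter_box 0) t t).
    unfold Pn, Qn. simpl. tauto.
  - assert (Hk : L * (k * (/ 2) ^ n) * d <= k * (/ 2) ^ S n).
    { pose proof (pow_half_pos n). simpl pow.
      replace (L * (k * (/ 2) ^ n) * d) with (k * (/ 2) ^ n * (L * d)) by ring.
      replace (k * (/ 2 * (/ 2) ^ n)) with (k * (/ 2) ^ n * / 2) by ring.
      apply Rmult_le_compat_l; nra. }
    split; eapply Rle_trans; try apply Hk.
    + apply (picard_op_contraction F1 a b k M L d M_ge0 L_ge0 d_ge0 F1_box a _ _ _ _ _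
        (picard_iter_box n) (picard_iter_box (S n)) IH).
    + apply (picard_op_contraction F2 a b k M L d M_ge0 L_ge0 d_ge0 F2_box b _ _ _ _ _
        (picard_iter_box n) (picard_iter_box (S n)) IH).
Qed.

Let P t := real (Lim_seq (fun n => Pn n t)).
Let Q t := real (Lim_seq (fun n => Qn n t)).

Lemma picard_limit_P t : Un_cv (fun n => Pn n t) (P t) /\
  forall n, Rabs (P t - Pn n t) <= 2 * k * (/ 2) ^ n.
Proof. apply geometric_Cauchy_limit; auto. intros n. apply (picard_iter_step n t). Qed.

Lemma picard_limit_Q t : Un_cv (fun n => Qn n t) (Q t) /\
  forall n, Rabs (Q t - Qn n t) <= 2 * k * (/ 2) ^ n.
Proof. apply geometric_Cauchy_limit; auto. intros n. apply (picard_iter_step n t). Qed.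

Lemma picard_limit_box : box_path a b k M P Q.
Proof.
  intros t s. destruct (picard_limit_P t) as [HPt _]. destruct (picard_limit_P s) as [HPs _].
  destruct (picard_limit_Q t) as [HQt _]. destruct (picard_limit_Q s) as [HQs _].
  repeat split.
  - apply (Un_cv_abs_le _ _ _ _ 0 HPt). intros m _. apply (picard_iter_box m t t).
  - apply (Un_cv_abs_le _ _ _ _ 0 HQt). intros m _. apply (picard_iter_box m t t).
  - rewrite <- (Rminus_0_r (P t - P s)).
    apply (Un_cv_abs_le (fun n => Pn n t - Pn n s) _ _ _ 0); [apply CV_minus; auto|].
    intros m _. rewrite Rminus_0_r. apply (picard_iter_box m t s).
  - rewrite <- (Rminus_0_r (Q t - Q s)).
    apply (Un_cv_abs_le (fun n => Qn n t - Qn n s) _ _ _ 0); [apply CV_minus; auto|].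
    intros m _. rewrite Rminus_0_r. apply (picard_iter_box m t s).
Qed.

(* The limit is a fixed point: [Xn (S n)] is squeezed between [X] and the Picard image of the limit. *)
Lemma picard_limit_fixed (F : R -> R -> R) c (Xn : nat -> R -> R) (X : R -> R) :
  box_lipschitz F a b k M L ->
  (forall n t, Xn (S n) t = picard_op F c d (Pn n) (Qn n) t) ->
  (forall n t, Rabs (X t - Xn n t) <= 2 * k * (/ 2) ^ n) ->
  forall t, X t = picard_op F c d P Q t.
Proof.
  intros HF Hstep Hlim t. apply (eq_of_geometric_sandwich _ _ (fun n => Xn (S n) t) k).
  - intros n. eapply Rle_trans; [apply Hlim|]. simpl pow. right; field.
  - intros n. rewrite Hstep.
    eapply Rle_trans.
    { apply (picard_op_contraction F a b k M L d M_ge0 L_ge0 d_ge0 HF c _ _ _ _ (2 * k * (/ 2) ^ n)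
        picard_limit_box (picard_iter_box n)).
      intros u. rewrite (Rabs_minus_sym (Pn n u)), (Rabs_minus_sym (Qn n u)).
      split; [apply picard_limit_P|apply picard_limit_Q]. }
    pose proof (pow_half_pos n).
    replace (L * (2 * k * (/ 2) ^ n) * d) with (2 * k * (/ 2) ^ n * (L * d)) by ring.
    replace (k * (/ 2) ^ n) with (2 * k * (/ 2) ^ n * / 2) by field.
    apply Rmult_le_compat_l; nra.
Qed.

Theorem picard_local_solution : exists P Q : R -> R,
  P 0 = a /\ Q 0 = b /\ (forall t, Rabs (P t - a) <= k /\ Rabs (Q t - b) <= k) /\
  forall x y, 0 <= x <= d -> 0 <= y <= d ->
    Rabs (P y - P x - (y - x) * F1 (P x) (Q x)) <= L * M * (y - x) ^ 2 /\
    Rabs (Q y - Q x - (y - x) * F2 (P x) (Q x)) <= L * M * (y - x) ^ 2.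
Proof.
  assert (HP : forall t, P t = picard_op F1 a d P Q t).
  { apply (picard_limit_fixed F1 a Pn); auto. intros n t'. apply (picard_limit_P t'). }
  assert (HQ : forall t, Q t = picard_op F2 b d P Q t).
  { apply (picard_limit_fixed F2 b Qn); auto. intros n t'. apply (picard_limit_Q t'). }
  exists P, Q. split; [|split; [|split]].
  - rewrite HP. unfold picard_op. rewrite clamp_id, RInt_point by lra. apply Rplus_0_r.
  - rewrite HQ. unfold picard_op. rewrite clamp_id, RInt_point by lra. apply Rplus_0_r.
  - intros t. destruct (picard_limit_box t t). tauto.
  - intros x y Hx Hy. split.
    + apply (picard_op_taylor F1 a b k M L d M_ge0 L_ge0 F1_box a P Q); auto.
      apply picard_limit_box.
    + apply (picard_op_taylor F2 a b k M L d M_ge0 L_ge0 F2_box b P Q); auto.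
      apply picard_limit_box.
Qed.

End PicardIteration.

(** * Lipschitz bounds on boxes *)

Definition box_regular (F : R -> R -> R) (a b k : R) : Prop :=
  exists M L, 0 <= M /\ 0 <= L /\ box_lipschitz F a b k M L.

Lemma box_lipschitz_mono F a b k M L M' L' : M <= M' -> L <= L' ->
  box_lipschitz F a b k M L -> box_lipschitz F a b k M' L'.
Proof.
  intros HM HL H p q p' q' H1 H2 H3 H4. destruct (H p q p' q' H1 H2 H3 H4) as [X Y].
  split; [lra|]. eapply Rle_trans; [apply Y|]. apply Rmult_le_compat_r; auto.
  eapply Rle_trans; [apply Rabs_pos|apply Rmax_l].
Qed.

Lemma box_regular_pair F G a b k : box_regular F a b k -> box_regular G a b k ->
  exists M L, 0 <= M /\ 0 <= L /\ box_lipschitz F a b k M L /\ box_lipschitz G a b k M L.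
Proof.
  intros (M1 & L1 & HM1 & HL1 & B1) (M2 & L2 & HM2 & HL2 & B2).
  exists (Rmax M1 M2), (Rmax L1 L2).
  split; [eapply Rle_trans; [apply HM1|apply Rmax_l]|].
  split; [eapply Rle_trans; [apply HL1|apply Rmax_l]|].
  split; [apply (box_lipschitz_mono F a b k M1 L1)|apply (box_lipschitz_mono G a b k M2 L2)];
    auto using Rmax_l, Rmax_r.
Qed.

Lemma box_regular_ext F G a b k :
  (forall p q, Rabs (p - a) <= k -> Rabs (q - b) <= k -> F p q = G p q) ->
  box_regular F a b k -> box_regular G a b k.
Proof.
  intros He (M & L & HM & HL & H). exists M, L. split; [auto|split; [auto|]].
  intros p q p' q' H1 H2 H3 H4. rewrite <- (He p q), <- (He p' q') by auto. apply H; auto.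
Qed.

Lemma box_regular_const c a b k : box_regular (fun _ _ => c) a b k.
Proof.
  exists (Rabs c), 0. split; [apply Rabs_pos|split; [lra|]].
  intros p q p' q' _ _ _ _. rewrite Rminus_diag, Rabs_R0, Rmult_0_l. lra.
Qed.

Lemma box_regular_fst a b k : box_regular (fun p _ => p) a b k.
Proof.
  exists (Rabs a + Rabs k), 1. pose proof (Rabs_pos a). pose proof (Rabs_pos k).
  split; [lra|split; [lra|]].
  intros p q p' q' Hp _ _ _. split.
  - pose proof (Rabs_triang (p - a) a). pose proof (Rle_abs k).
    replace (p - a + a) with p in * by ring. lra.
  - rewrite Rmult_1_l. apply Rmax_l.
Qed.

Lemma box_regular_snd a b k : box_regular (fun _ q => q) a b k.
Proof.
  exists (Rabs b + Rabs k), 1. pose proof (Rabs_pos b). pose proof (Rabs_pos k).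
  split; [lra|split; [lra|]].
  intros p q p' q' _ Hq _ _. split.
  - pose proof (Rabs_triang (q - b) b). pose proof (Rle_abs k).
    replace (q - b + b) with q in * by ring. lra.
  - rewrite Rmult_1_l. apply Rmax_r.
Qed.

Lemma box_regular_plus F G a b k : box_regular F a b k -> box_regular G a b k ->
  box_regular (fun p q => F p q + G p q) a b k.
Proof.
  intros (M1 & L1 & HM1 & HL1 & H1) (M2 & L2 & HM2 & HL2 & H2).
  exists (M1 + M2), (L1 + L2). split; [lra|split; [lra|]].
  intros p q p' q' X1 X2 X3 X4.
  destruct (H1 p q p' q' X1 X2 X3 X4) as [A1 B1]. destruct (H2 p q p' q' X1 X2 X3 X4) as [A2 B2].
  split.
  - eapply Rle_trans; [apply Rabs_triang|lra].
  - replace (F p q + G p q - (F p' q' + G p' q')) with ((F p q - F p' q') + (G p q - G p' q')) by ring.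
    eapply Rle_trans; [apply Rabs_triang|lra].
Qed.

Lemma box_regular_mult F G a b k : box_regular F a b k -> box_regular G a b k ->
  box_regular (fun p q => F p q * G p q) a b k.
Proof.
  intros (M1 & L1 & HM1 & HL1 & H1) (M2 & L2 & HM2 & HL2 & H2).
  exists (M1 * M2), (M1 * L2 + M2 * L1). split; [nra|split; [nra|]].
  intros p q p' q' X1 X2 X3 X4.
  destruct (H1 p q p' q' X1 X2 X3 X4) as [A1 B1]. destruct (H2 p q p' q' X1 X2 X3 X4) as [A2 B2].
  destruct (H2 p' q' p q X3 X4 X1 X2) as [A2' _].
  set (dd := Rmax (Rabs (p - p')) (Rabs (q - q'))) in *.
  split.
  - rewrite Rabs_mult. apply Rmult_le_compat; auto; apply Rabs_pos.
  - replace (F p q * G p q - F p' q' * G p' q')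
      with (F p q * (G p q - G p' q') + G p' q' * (F p q - F p' q')) by ring.
    eapply Rle_trans; [apply Rabs_triang|]. rewrite !Rabs_mult.
    assert (Rabs (F p q) * Rabs (G p q - G p' q') <= M1 * (L2 * dd))
      by (apply Rmult_le_compat; auto; apply Rabs_pos).
    assert (Rabs (G p' q') * Rabs (F p q - F p' q') <= M2 * (L1 * dd))
      by (apply Rmult_le_compat; auto; apply Rabs_pos).
    lra.
Qed.

Lemma box_regular_inv F a b k c : 0 < c ->
  (forall p q, Rabs (p - a) <= k -> Rabs (q - b) <= k -> c <= Rabs (F p q)) ->
  box_regular F a b k -> box_regular (fun p q => / F p q) a b k.
Proof.
  intros Hc Hlow (M & L & HM & HL & H).
  exists (/ c), (L / (c * c)). split; [apply Rlt_le, Rinv_0_lt_compat; lra|split].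
  { apply Rmult_le_pos; auto. apply Rlt_le, Rinv_0_lt_compat; nra. }
  intros p q p' q' X1 X2 X3 X4.
  pose proof (Hlow p q X1 X2) as C1. pose proof (Hlow p' q' X3 X4) as C2.
  destruct (H p q p' q' X1 X2 X3 X4) as [_ B1].
  assert (F p q <> 0) by (intro E; rewrite E, Rabs_R0 in C1; lra).
  assert (F p' q' <> 0) by (intro E; rewrite E, Rabs_R0 in C2; lra).
  split.
  - rewrite Rabs_inv. apply Rinv_le_contravar; auto.
  - replace (/ F p q - / F p' q') with ((F p' q' - F p q) * / (F p q * F p' q')) by (field; auto).
    rewrite Rabs_mult, Rabs_minus_sym, Rabs_inv, Rabs_mult.
    apply Rle_trans with (L * Rmax (Rabs (p - p')) (Rabs (q - q')) * / (c * c));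
      [|right; unfold Rdiv; ring].
    apply Rmult_le_compat; auto; [apply Rabs_pos|apply Rlt_le, Rinv_0_lt_compat; nra|].
    apply Rinv_le_contravar; [nra|]. apply Rmult_le_compat; lra.
Qed.

Lemma box_regular_sqrt F a b k c : 0 < c ->
  (forall p q, Rabs (p - a) <= k -> Rabs (q - b) <= k -> c <= F p q) ->
  box_regular F a b k -> box_regular (fun p q => sqrt (F p q)) a b k.
Proof.
  intros Hc Hlow (M & L & HM & HL & H).
  pose proof (sqrt_lt_R0 c Hc) as Hsc.
  exists (M + 1), (L / (2 * sqrt c)). split; [lra|split].
  { apply Rmult_le_pos; auto. apply Rlt_le, Rinv_0_lt_compat; lra. }
  intros p q p' q' X1 X2 X3 X4.
  pose proof (Hlow p q X1 X2) as C1. pose proof (Hlow p' q' X3 X4) as C2.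
  destruct (H p q p' q' X1 X2 X3 X4) as [A1 B1].
  rewrite Rabs_right in A1 by lra.
  split.
  - pose proof (sqrt_sqrt (F p q) ltac:(lra)). pose proof (sqrt_pos (F p q)).
    rewrite Rabs_right by lra. nra.
  - assert (S1 : sqrt c <= sqrt (F p q)) by (apply sqrt_le_1_alt; lra).
    assert (S2 : sqrt c <= sqrt (F p' q')) by (apply sqrt_le_1_alt; lra).
    replace (sqrt (F p q) - sqrt (F p' q')) with ((F p q - F p' q') / (sqrt (F p q) + sqrt (F p' q'))).
    2: { field_simplify_eq; [|lra]. rewrite <- !Rsqr_pow2, !Rsqr_sqrt by lra. ring. }
    unfold Rdiv. rewrite Rabs_mult, Rabs_inv, (Rabs_right (_ + _)) by lra.
    apply Rle_trans with (L * Rmax (Rabs (p - p')) (Rabs (q - q')) * / (2 * sqrt c));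
      [|right; unfold Rdiv; ring].
    apply Rmult_le_compat; auto; [apply Rabs_pos|apply Rlt_le, Rinv_0_lt_compat; lra|].
    apply Rinv_le_contravar; lra.
Qed.

Lemma box_regular_comp_snd (h : R -> R) a b k Mh Kh : 0 <= Kh ->
  (forall x y, Rabs (x - b) <= k -> Rabs (y - b) <= k ->
     Rabs (h x) <= Mh /\ Rabs (h x - h y) <= Kh * Rabs (x - y)) ->
  box_regular (fun _ q => h q) a b k.
Proof.
  intros HK H. exists (Rabs Mh), Kh. split; [apply Rabs_pos|split; auto].
  intros p q p' q' _ X2 _ X4. destruct (H q q' X2 X4) as [A1 B1]. split.
  - pose proof (Rle_abs Mh). lra.
  - eapply Rle_trans; [apply B1|]. apply Rmult_le_compat_l; auto. apply Rmax_r.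
Qed.

Lemma box_regular_continuous F a b k : 0 < k -> box_regular F a b k ->
  forall eps, 0 < eps -> exists e, 0 < e /\ forall p q, Rabs (p - a) < e -> Rabs (q - b) < e ->
    Rabs (F p q - F a b) < eps.
Proof.
  intros Hk (M & L & HM & HL & HF) eps Heps.
  exists (Rmin k (eps / (L + 1))). split.
  { apply Rmin_pos; auto. apply Rdiv_lt_0_compat; lra. }
  intros p q Hp Hq.
  pose proof (Rmin_l k (eps / (L + 1))). pose proof (Rmin_r k (eps / (L + 1))).
  assert (Z : Rabs (a - a) <= k /\ Rabs (b - b) <= k) by (rewrite !Rminus_diag, Rabs_R0; lra).
  destruct (HF p q a b ltac:(lra) ltac:(lra) (proj1 Z) (proj2 Z)) as [_ X].
  eapply Rle_lt_trans; [apply X|].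
  assert (Rmax (Rabs (p - a)) (Rabs (q - b)) < eps / (L + 1)) by (apply Rmax_lub_lt; lra).
  apply Rle_lt_trans with (L * (eps / (L + 1))); [apply Rmult_le_compat_l; lra|].
  apply Rmult_lt_reg_r with (L + 1); [lra|]. field_simplify; nra.
Qed.

(** * The toy model *)

Definition sq_weight (g : R -> R) (w : R) : R := w ^ 2 * g (w ^ 2).

Section SquareWeight.

Variable g : R -> R.
Hypothesis HG : condG g.

Lemma sq_weight_derivable w : 0 < w -> derivable_pt_lim (sq_weight g) w (Derive (sq_weight g) w).
Proof.
  intros Hw. destruct HG as (_ & _ & H3 & _).
  destruct (H3 w Hw) as (l & (f1 & (eps & He & Hd) & _) & _).
  apply is_derive_Reals, Derive_correct. exists (f1 w). apply is_derive_Reals.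
  apply Hd. rewrite Rminus_diag, Rabs_R0. auto.
Qed.

Lemma Derive_sq_weight_derivable z : 0 < z ->
  exists l, 0 < l /\ derivable_pt_lim (Derive (sq_weight g)) z l.
Proof.
  intros Hz. destruct HG as (_ & _ & H3 & _).
  destruct (H3 z Hz) as (l & (f1 & (eps & He & Hd) & Hf1) & Hl).
  exists l. split; auto. apply (derivable_pt_lim_local f1); auto.
  exists eps. split; auto. intros y Hy. apply is_derive_unique, is_derive_Reals, Hd. auto.
Qed.

Lemma Derive_sq_weight_increasing x y : 0 < x -> x <= y ->
  Derive (sq_weight g) x <= Derive (sq_weight g) y.
Proof.
  intros Hx Hxy. destruct (Req_dec x y) as [<-|Ne]; [lra|].
  set (D := Derive (sq_weight g)).
  assert (Hc : forall c, x <= c <= y -> derivable_pt_lim D c (Derive D c)).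
  { intros c Hc. destruct (Derive_sq_weight_derivable c ltac:(lra)) as (l & _ & Hl).
    apply is_derive_Reals, Derive_correct. exists l. apply is_derive_Reals. auto. }
  destruct (MVT_cor2 D (Derive D) x y ltac:(lra) Hc) as (c & Hc1 & Hc2).
  destruct (Derive_sq_weight_derivable c ltac:(lra)) as (l & Hl0 & Hl).
  assert (Derive D c = l) by (apply (uniqueness_limite D c); auto; apply Hc; lra).
  nra.
Qed.

(* By convexity, |(sq_weight g)'| on [lo, hi] is bounded by its values at the endpoints. *)
Lemma sq_weight_lipschitz_on lo hi x y : 0 < lo -> lo <= x <= hi -> lo <= y <= hi ->
  Rabs (sq_weight g x - sq_weight g y)
    <= Rmax (Rabs (Derive (sq_weight g) lo)) (Rabs (Derive (sq_weight g) hi)) * Rabs (x - y).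
Proof.
  intros Hlo.
  set (K := Rmax (Rabs (Derive (sq_weight g) lo)) (Rabs (Derive (sq_weight g) hi))).
  assert (Key : forall x y, lo <= x <= hi -> lo <= y <= hi -> x < y ->
    Rabs (sq_weight g y - sq_weight g x) <= K * Rabs (y - x)).
  { intros x' y' Hx Hy Hxy.
    destruct (MVT_cor2 (sq_weight g) (Derive (sq_weight g)) x' y' Hxy) as (c & Hc1 & Hc2).
    { intros c Hc. apply sq_weight_derivable. lra. }
    rewrite Hc1, Rabs_mult. apply Rmult_le_compat_r; [apply Rabs_pos|].
    pose proof (Derive_sq_weight_increasing lo c Hlo ltac:(lra)).
    pose proof (Derive_sq_weight_increasing c hi ltac:(lra) ltac:(lra)).
    assert (Rabs (Derive (sq_weight g) lo) <= K) by apply Rmax_l.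
    assert (Rabs (Derive (sq_weight g) hi) <= K) by apply Rmax_r.
    unfold Rabs in *. repeat destruct Rcase_abs; lra. }
  intros Hx Hy. destruct (Rtotal_order x y) as [H|[<-|H]].
  - rewrite Rabs_minus_sym, (Rabs_minus_sym x). apply Key; auto.
  - rewrite !Rminus_diag, Rabs_R0. lra.
  - apply Key; auto.
Qed.

Lemma box_regular_sq_weight a b k : 0 <= k -> k < b -> box_regular (fun _ q => sq_weight g q) a b k.
Proof.
  intros Hk Hkb.
  set (K := Rmax (Rabs (Derive (sq_weight g) (b - k))) (Rabs (Derive (sq_weight g) (b + k)))).
  assert (HK : 0 <= K) by (unfold K; eapply Rle_trans; [apply Rabs_pos|apply Rmax_l]).
  apply (box_regular_comp_snd _ a b k (Rabs (sq_weight g b) + K * k) K HK).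
  intros x y Hx Hy.
  apply Rabs_le_between' in Hx. apply Rabs_le_between' in Hy. split.
  - pose proof (sq_weight_lipschitz_on (b - k) (b + k) x b ltac:(lra) ltac:(lra) ltac:(lra)).
    pose proof (Rabs_triang (sq_weight g x - sq_weight g b) (sq_weight g b)).
    replace (sq_weight g x - sq_weight g b + sq_weight g b) with (sq_weight g x) in * by ring.
    assert (K * Rabs (x - b) <= K * k).
    { apply Rmult_le_compat_l; auto. apply Rabs_le_between'. lra. }
    unfold K in *. lra.
  - apply (sq_weight_lipschitz_on (b - k) (b + k)); lra.
Qed.

End SquareWeight.

Definition toy_box_radius (a0 b0 : R) : R := Rmin ((1 - Rabs a0) / 2) (b0 / 2).

Section ToyBox.

Variables (a0 b0 : R).
Hypotheses (a0_lt1 : Rabs a0 < 1) (b0_pos : 0 < b0).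

Lemma toy_box_radius_pos : 0 < toy_box_radius a0 b0.
Proof. unfold toy_box_radius. apply Rmin_pos; lra. Qed.

Lemma toy_box_bounds p q :
  Rabs (p - a0) <= toy_box_radius a0 b0 -> Rabs (q - b0) <= toy_box_radius a0 b0 ->
  Rabs p <= (1 + Rabs a0) / 2 /\ b0 / 2 <= q.
Proof.
  intros Hp Hq. unfold toy_box_radius in *.
  pose proof (Rmin_l ((1 - Rabs a0) / 2) (b0 / 2)). pose proof (Rmin_r ((1 - Rabs a0) / 2) (b0 / 2)).
  apply Rabs_le_between' in Hq. split; [|lra].
  pose proof (Rabs_triang (p - a0) a0). replace (p - a0 + a0) with p in * by ring. lra.
Qed.

Lemma toy_box_in_M0 p q :
  Rabs (p - a0) <= toy_box_radius a0 b0 -> Rabs (q - b0) <= toy_box_radius a0 b0 ->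
  -1 < p < 1 /\ 0 < q.
Proof.
  intros Hp Hq. destruct (toy_box_bounds p q Hp Hq) as [H1 H2].
  assert (Hp1 : Rabs p < 1) by lra. apply Rabs_def2 in Hp1. lra.
Qed.

Lemma toyF_box_regular g beta : condG g -> box_regular (toyF g beta) a0 b0 (toy_box_radius a0 b0).
Proof.
  intros HG. pose proof toy_box_radius_pos as Hk.
  set (c := 1 - ((1 + Rabs a0) / 2) ^ 2).
  assert (Hc : 0 < c) by (unfold c; pose proof (Rabs_pos a0); nra).
  assert (Hone : box_regular (fun p _ => 1 - p ^ 2) a0 b0 (toy_box_radius a0 b0)).
  { eapply box_regular_ext;
      [|apply box_regular_plus; [apply (box_regular_const 1)|apply box_regular_mult;
         [apply (box_regular_const (-1))|apply box_regular_mult; apply box_regular_fst]]].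
    intros; simpl; ring. }
  assert (Hsqrt : box_regular (fun p _ => sqrt (1 - p ^ 2)) a0 b0 (toy_box_radius a0 b0)).
  { apply (box_regular_sqrt _ _ _ _ c); auto. intros p q Hp Hq.
    destruct (toy_box_bounds p q Hp Hq) as [H1 _]. unfold c.
    rewrite <- (pow2_abs p). pose proof (Rabs_pos p).
    apply Rplus_le_compat_l, Ropp_le_contravar, pow_incr. lra. }
  assert (Hinv : box_regular (fun _ q => / q) a0 b0 (toy_box_radius a0 b0)).
  { apply (box_regular_inv _ _ _ _ (b0 / 2)); [lra| |apply box_regular_snd].
    intros p q Hp Hq. destruct (toy_box_bounds p q Hp Hq) as [_ H2]. rewrite Rabs_right; lra. }
  assert (Hbr : box_regular (fun p q => beta * sq_weight g q + p) a0 b0 (toy_box_radius a0 b0)).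
  { apply box_regular_plus; [apply box_regular_mult; [apply box_regular_const|]|apply box_regular_fst].
    apply box_regular_sq_weight; auto; [lra|].
    pose proof toy_box_radius_pos. unfold toy_box_radius in *.
    pose proof (Rmin_r ((1 - Rabs a0) / 2) (b0 / 2)). lra. }
  assert (Hfactor : box_regular (fun p q => 3 / 2 * (1 - p ^ 2) * / q) a0 b0 (toy_box_radius a0 b0)).
  { apply box_regular_mult; [|apply Hinv].
    apply box_regular_mult; [apply (box_regular_const (3 / 2))|apply Hone]. }
  assert (Hbracket : box_regular (fun p q => -1 + sqrt (1 - p ^ 2) * (beta * sq_weight g q + p) * / q)
                       a0 b0 (toy_box_radius a0 b0)).
  { apply box_regular_plus; [apply (box_regular_const (-1))|].
    apply box_regular_mult; [apply box_regular_mult; [apply Hsqrt|apply Hbr]|apply Hinv]. }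
  eapply box_regular_ext; [|apply (box_regular_mult _ _ _ _ _ Hfactor Hbracket)].
  intros p q _ _. cbv beta. unfold toyF, sq_weight, Rdiv. ring.
Qed.

End ToyBox.

Lemma toyF_continuous g beta a0 b0 : condG g -> Rabs a0 < 1 -> 0 < b0 ->
  forall eps, 0 < eps -> exists e, 0 < e /\ forall p q, Rabs (p - a0) < e -> Rabs (q - b0) < e ->
    Rabs (toyF g beta p q - toyF g beta a0 b0) < eps.
Proof.
  intros HG Ha Hb. apply (box_regular_continuous _ _ _ (toy_box_radius a0 b0)).
  - apply toy_box_radius_pos; auto.
  - apply toyF_box_regular; auto.
Qed.

Lemma right_continuation (P : R -> Prop) T : 0 < T ->
  (exists sa, 0 < sa /\ forall s, 0 < s < sa -> P s) ->
  (forall t, 0 < t <= T -> (forall s, 0 < s < t -> P s) -> P t) ->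
  (forall t, 0 < t < T -> P t -> exists d, 0 < d /\ forall s, t < s < t + d -> P s) ->
  P T.
Proof.
  intros HT (sa & Hsa & Hinit) Hclosed Hopen.
  set (E := fun t => 0 < t <= T /\ forall s, 0 < s < t -> P s).
  assert (Hm : E (Rmin sa T)).
  { pose proof (Rmin_pos sa T Hsa HT). pose proof (Rmin_l sa T). pose proof (Rmin_r sa T).
    split; [lra|]. intros s Hs. apply Hinit. lra. }
  destruct (sup_approx (fun t => t) E T (Rmin sa T) Hm) as (ss & HssT & Hub & Happ).
  { intros s [Hs _]. lra. }
  pose proof (Hub _ Hm) as Hss0. pose proof (Rmin_pos sa T Hsa HT).
  assert (Hbelow : forall s, 0 < s < ss -> P s).
  { intros s Hs. destruct (Happ (ss - s) ltac:(lra)) as (t & [_ Ht] & Hst). apply Ht. lra. }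
  assert (Hss : P ss) by (apply Hclosed; [lra|auto]).
  destruct (Req_dec ss T) as [<-|Hne]; auto. exfalso.
  destruct (Hopen ss ltac:(lra) Hss) as (d & Hd & Hright).
  pose proof (Rmin_l (ss + d / 2) T). pose proof (Rmin_r (ss + d / 2) T).
  assert (Ht : E (Rmin (ss + d / 2) T)).
  { split; [split; [apply Rmin_pos|]; lra|].
    intros s Hs. destruct (Rlt_le_dec s ss) as [Hl|Hl]; [apply Hbelow; lra|].
    destruct (Req_dec s ss) as [->|Hs']; auto. apply Hright. lra. }
  specialize (Hub _ Ht). assert (ss < Rmin (ss + d / 2) T) by (apply Rmin_glb_lt; lra). lra.
Qed.

Lemma in_dom_le smax s t : in_dom smax t -> 0 < s <= t -> in_dom smax s.
Proof. intros [Ht1 Ht2] Hs. split; [lra|]. destruct smax; auto; lra. Qed.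

Lemma toy_rhs_continuity_pt g beta (rho r : R -> R) s : condG g -> -1 < rho s < 1 -> 0 < r s ->
  continuity_pt rho s -> continuity_pt r s -> continuity_pt (fun u => toyF g beta (rho u) (r u)) s.
Proof.
  intros HG Hrho Hr Hc1 Hc2. apply continuity_pt_of_abs_lt. intros eps Heps.
  destruct (toyF_continuous g beta (rho s) (r s) HG ltac:(apply Rabs_def1; lra) Hr eps Heps)
    as (e & He & Hcont).
  destruct (continuity_pt_abs_lt _ _ Hc1 e He) as (d1 & Hd1 & C1).
  destruct (continuity_pt_abs_lt _ _ Hc2 e He) as (d2 & Hd2 & C2).
  exists (Rmin d1 d2). split; [apply Rmin_pos; auto|].
  intros u Hu. pose proof (Rmin_l d1 d2). pose proof (Rmin_r d1 d2).
  apply Hcont; [apply C1|apply C2]; lra.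
Qed.

Section ToySolution.

Variables (g : R -> R) (beta : R) (rho r : R -> R) (smax : option R).
Hypotheses (HG : condG g) (Hsol : toy_solution g beta rho r smax).

Definition toy_decreasing_at (s : R) : Prop := toyF g beta (rho s) (r s) < 0 /\ 0 < rho s.

Lemma toy_solution_rho_continuity_pt s : in_dom smax s -> continuity_pt rho s.
Proof.
  intros Hs. destruct (Hsol s Hs) as (_ & _ & Hd & _).
  exact (derivable_continuous_pt _ _ (exist _ _ Hd)).
Qed.

Lemma toy_solution_rhs_continuity_pt s : in_dom smax s ->
  continuity_pt (fun u => toyF g beta (rho u) (r u)) s.
Proof.
  intros Hs. destruct (Hsol s Hs) as (H1 & H2 & _ & Hd).
  apply toy_rhs_continuity_pt; auto.
  - apply toy_solution_rho_continuity_pt; auto.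
  - exact (derivable_continuous_pt _ _ (exist _ _ Hd)).
Qed.

Lemma toy_decreasing_closed t : in_dom smax t -> ~ A_cond rho smax -> ~ B_cond rho smax ->
  (forall s, 0 < s < t -> toy_decreasing_at s) -> toy_decreasing_at t.
Proof.
  intros Ht HnA HnB Hbelow.
  assert (Ht0 : 0 < t) by apply Ht.
  assert (Hsign : forall s, 0 < s < t ->
    exists l, derivable_pt_lim rho s l /\ rho s * l < 0).
  { intros s Hs. exists (toyF g beta (rho s) (r s)). split.
    - apply (Hsol s (in_dom_le smax s t Ht ltac:(lra))).
    - destruct (Hbelow s Hs). nra. }
  assert (Hrho : 0 < rho t).
  { destruct (continuity_pt_nonneg_of_left rho t (toy_solution_rho_continuity_pt t Ht) Ht0)
      as [|Hz]; auto.
    - intros s Hs. apply Hbelow; auto.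
    - exfalso. apply HnA. exists t. auto. }
  split; auto.
  destruct (Rtotal_order (toyF g beta (rho t) (r t)) 0) as [|[Hz|Hpos]]; auto; exfalso.
  - apply HnB. exists t. split; [|split]; auto. rewrite <- Hz. apply (Hsol t Ht).
  - pose proof (continuity_pt_nonneg_of_left _ t
      (continuity_pt_opp _ t (toy_solution_rhs_continuity_pt t Ht)) Ht0) as Hle.
    cbv beta in Hle. unfold opp_fct in Hle. cbv beta in Hle.
    assert (0 <= - toyF g beta (rho t) (r t)); [|lra].
    apply Hle. intros s Hs. destruct (Hbelow s Hs). lra.
Qed.

Lemma toy_decreasing_open t : in_dom smax t -> toy_decreasing_at t ->
  exists d, 0 < d /\ forall s, Rabs (s - t) < d -> toy_decreasing_at s.
Proof.
  intros Ht [Hf Hrho].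
  destruct (continuity_pt_pos_near _ t (continuity_pt_opp _ t (toy_solution_rhs_continuity_pt t Ht)))
    as (d1 & Hd1 & C1); [unfold opp_fct; lra|].
  destruct (continuity_pt_pos_near _ t (toy_solution_rho_continuity_pt t Ht) Hrho) as (d2 & Hd2 & C2).
  exists (Rmin d1 d2). split; [apply Rmin_pos; auto|].
  intros s Hs. pose proof (Rmin_l d1 d2). pose proof (Rmin_r d1 d2).
  specialize (C1 s ltac:(lra)). unfold opp_fct in C1. split; [lra|]. apply C2. lra.
Qed.

Lemma toy_decreasing_everywhere :
  (exists s0, in_dom smax s0 /\ forall s, 0 < s < s0 ->
      (exists l, derivable_pt_lim rho s l /\ l < 0) /\ 0 < rho s) ->
  ~ A_cond rho smax -> ~ B_cond rho smax ->
  forall s, in_dom smax s -> toy_decreasing_at s.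
Proof.
  intros (sa & Hsa & Htip) HnA HnB sb Hsb.
  apply right_continuation.
  - apply Hsb.
  - exists sa. split; [apply Hsa|]. intros s Hs. destruct (Htip s Hs) as ((l & Hl & Hl0) & Hr).
    split; auto. replace (toyF g beta (rho s) (r s)) with l; auto.
    apply (uniqueness_limite rho s); auto. apply (Hsol s (in_dom_le smax s sa Hsa ltac:(lra))).
  - intros t Ht. apply toy_decreasing_closed; auto. apply (in_dom_le smax t sb Hsb Ht).
  - intros t Ht Hgood. destruct (toy_decreasing_open t (in_dom_le smax t sb Hsb ltac:(lra)) Hgood)
      as (d & Hd & Hnear).
    exists d. split; auto. intros s Hs. apply Hnear. apply Rabs_def1; lra.
Qed.

Lemma toy_decreasing_monotone : (forall s, in_dom smax s -> toy_decreasing_at s) ->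
  forall x y, 0 < x -> x < y -> in_dom smax y ->
    rho y < rho x /\ exists c, x < c < y /\ 0 < rho c < 1 /\ r y - r x = rho c * (y - x).
Proof.
  intros Hgood x y Hx Hxy Hy.
  assert (Hdom : forall c, x <= c <= y -> in_dom smax c)
    by (intros c Hc; apply (in_dom_le smax c y Hy); lra).
  split.
  - destruct (MVT_cor2 rho (fun c => toyF g beta (rho c) (r c)) x y Hxy) as (c & Hc & Hcxy).
    { intros c Hc. apply (Hsol c (Hdom c Hc)). }
    destruct (Hgood c (Hdom c ltac:(lra))). nra.
  - destruct (MVT_cor2 r rho x y Hxy) as (c & Hc & Hcxy).
    { intros c Hc. apply (Hsol c (Hdom c Hc)). }
    exists c. split; [auto|split; [|auto]].
    destruct (Hgood c (Hdom c ltac:(lra))). destruct (Hsol c (Hdom c ltac:(lra))). lra.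
Qed.

End ToySolution.

Definition left_lim (f : R -> R) (m l : R) : Prop :=
  forall eps, 0 < eps -> exists d, 0 < d /\ forall s, m - d < s < m -> Rabs (f s - l) < eps.

Lemma decreasing_left_lim f m lo : 0 < m ->
  (forall x y, 0 < x -> x < y -> y < m -> f y < f x) -> (forall s, 0 < s < m -> lo <= f s) ->
  exists l, lo <= l /\ (forall s, 0 < s < m -> l <= f s) /\ left_lim f m l.
Proof.
  intros Hm Hdec Hlo.
  destruct (inf_approx f (fun s => 0 < s < m) lo (m / 2)) as (l & Hl0 & Hl1 & Hl2); [lra|auto|].
  exists l. split; [|split]; auto. intros eps He.
  destruct (Hl2 eps He) as (s1 & Hs1 & Hf1). exists (m - s1). split; [lra|].
  intros s Hs. pose proof (Hl1 s ltac:(lra)). pose proof (Hdec s1 s ltac:(lra) ltac:(lra) ltac:(lra)).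
  apply Rabs_def1; lra.
Qed.

Lemma increasing_left_lim f m hi : 0 < m ->
  (forall x y, 0 < x -> x < y -> y < m -> f x < f y) -> (forall s, 0 < s < m -> f s <= hi) ->
  exists l, l <= hi /\ (forall s, 0 < s < m -> f s <= l) /\ left_lim f m l.
Proof.
  intros Hm Hinc Hhi.
  destruct (sup_approx f (fun s => 0 < s < m) hi (m / 2)) as (l & Hl0 & Hl1 & Hl2); [lra|auto|].
  exists l. split; [|split]; auto. intros eps He.
  destruct (Hl2 eps He) as (s1 & Hs1 & Hf1). exists (m - s1). split; [lra|].
  intros s Hs. pose proof (Hl1 s ltac:(lra)). pose proof (Hinc s1 s ltac:(lra) ltac:(lra) ltac:(lra)).
  apply Rabs_def1; lra.
Qed.

Lemma decreasing_lim_infty f lo :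
  (forall x y, 0 < x -> x < y -> f y < f x) -> (forall s, 0 < s -> lo <= f s) ->
  exists l, lo <= l /\ (forall s, 0 < s -> l <= f s) /\ lim_infty f l.
Proof.
  intros Hdec Hlo.
  destruct (inf_approx f (fun s => 0 < s) lo 1) as (l & Hl0 & Hl1 & Hl2); [lra|auto|].
  exists l. split; [|split]; auto. intros eps He.
  destruct (Hl2 eps He) as (s1 & Hs1 & Hf1). exists s1.
  intros s Hs. pose proof (Hl1 s ltac:(lra)). pose proof (Hdec s1 s Hs1 Hs).
  apply Rabs_def1; lra.
Qed.

Lemma increasing_lim_infty f hi :
  (forall x y, 0 < x -> x < y -> f x < f y) -> (forall s, 0 < s -> f s <= hi) ->
  exists l, l <= hi /\ (forall s, 0 < s -> f s <= l) /\ lim_infty f l.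
Proof.
  intros Hinc Hhi.
  destruct (sup_approx f (fun s => 0 < s) hi 1) as (l & Hl0 & Hl1 & Hl2); [lra|auto|].
  exists l. split; [|split]; auto. intros eps He.
  destruct (Hl2 eps He) as (s1 & Hs1 & Hf1). exists s1.
  intros s Hs. pose proof (Hl1 s ltac:(lra)). pose proof (Hinc s1 s Hs1 Hs).
  apply Rabs_def1; lra.
Qed.

Lemma left_lim_affine_abs_le f m fm A B C s : s < m -> left_lim f m fm ->
  (forall u, s < u < m -> Rabs (f u - A - u * B) <= C) -> Rabs (fm - A - m * B) <= C.
Proof.
  intros Hs Hf Hbound. destruct (Rle_dec (Rabs (fm - A - m * B)) C) as [|Hgt]; auto. exfalso.
  set (e := Rabs (fm - A - m * B) - C).
  destruct (Hf (e / 2) ltac:(unfold e; lra)) as (d & Hd & Hnear).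
  set (u := m - Rmin (Rmin d (m - s)) (e / (2 * (Rabs B + 1))) / 2).
  assert (Hq : 0 < e / (2 * (Rabs B + 1))).
  { apply Rdiv_lt_0_compat; [unfold e; lra|]. pose proof (Rabs_pos B). lra. }
  pose proof (Rmin_pos d (m - s) Hd ltac:(lra)).
  pose proof (Rmin_pos (Rmin d (m - s)) _ ltac:(assumption) Hq).
  pose proof (Rmin_l d (m - s)). pose proof (Rmin_r d (m - s)).
  pose proof (Rmin_l (Rmin d (m - s)) (e / (2 * (Rabs B + 1)))).
  pose proof (Rmin_r (Rmin d (m - s)) (e / (2 * (Rabs B + 1)))).
  assert (Hu : s < u < m) by (unfold u; lra).
  assert (HuB : Rabs ((m - u) * B) <= e / 2).
  { rewrite Rabs_mult, (Rabs_right (m - u)) by lra. pose proof (Rabs_pos B).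
    apply Rle_trans with (e / (2 * (Rabs B + 1)) * (Rabs B + 1)); [|right; field; lra].
    apply Rmult_le_compat; unfold u; lra. }
  specialize (Hnear u ltac:(unfold u; lra)). specialize (Hbound u Hu).
  assert (Rabs (fm - A - m * B) <= Rabs (f u - A - u * B) + (Rabs (f u - fm) + Rabs ((m - u) * B))).
  { replace (fm - A - m * B) with ((f u - A - u * B) + (- (f u - fm) + - ((m - u) * B))) by ring.
    eapply Rle_trans; [apply Rabs_triang|]. apply Rplus_le_compat_l.
    eapply Rle_trans; [apply Rabs_triang|]. rewrite !Rabs_Ropp. lra. }
  unfold e in *. lra.
Qed.

Lemma left_lim_taylor f df m fm dm : 0 < m ->
  (forall c, 0 < c < m -> derivable_pt_lim f c (df c)) -> left_lim f m fm -> left_lim df m dm ->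
  forall eps, 0 < eps -> exists d, 0 < d /\ forall h, - d < h < 0 ->
    Rabs (f (m + h) - fm - h * dm) <= eps * Rabs h.
Proof.
  intros Hm Hd Hf Hdf eps Heps. destruct (Hdf eps Heps) as (d1 & Hd1 & H1).
  exists (Rmin d1 m). split; [apply Rmin_pos; auto|].
  intros h Hh. pose proof (Rmin_l d1 m). pose proof (Rmin_r d1 m).
  set (s := m + h).
  assert (Hmvt : forall u, s < u < m ->
    Rabs (f u - (f s - s * dm) - u * dm) <= eps * (m - s)).
  { intros u Hu. destruct (MVT_cor2 f df s u ltac:(lra)) as (c & Hc1 & Hc2).
    { intros c Hc. apply Hd. unfold s in *; lra. }
    replace (f u - (f s - s * dm) - u * dm) with ((f u - f s) - (u - s) * dm) by ring.
    rewrite Hc1. replace (df c * (u - s) - (u - s) * dm) with ((df c - dm) * (u - s)) by ring.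
    rewrite Rabs_mult, (Rabs_right (u - s)) by lra.
    assert (Rabs (df c - dm) < eps) by (apply H1; unfold s in *; lra).
    apply Rle_trans with (eps * (u - s)); [apply Rmult_le_compat_r; lra|].
    apply Rmult_le_compat_l; lra. }
  pose proof (left_lim_affine_abs_le f m fm _ dm _ s ltac:(unfold s; lra) Hf Hmvt) as Hend.
  replace (fm - (f s - s * dm) - m * dm) with (- (f (m + h) - fm - h * dm)) in Hend
    by (unfold s; ring).
  replace (m - s) with (- h) in Hend by (unfold s; ring).
  rewrite Rabs_Ropp in Hend. rewrite (Rabs_left h) by lra. exact Hend.
Qed.

Definition glued (f P : R -> R) (m : R) (s : R) : R := if Rlt_dec s m then f s else P (s - m).

Section Glue.

Variables (f df P dP : R -> R) (m d K : R).
Hypotheses (d_pos : 0 < d) (K_ge0 : 0 <= K)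
  (f_deriv : forall c, 0 < c < m -> derivable_pt_lim f c (df c))
  (f_left_taylor : forall eps, 0 < eps -> exists e, 0 < e /\ forall h, - e < h < 0 ->
     Rabs (f (m + h) - P 0 - h * dP 0) <= eps * Rabs h)
  (P_taylor : forall x y, 0 <= x <= d -> 0 <= y <= d ->
     Rabs (P y - P x - (y - x) * dP x) <= K * (y - x) ^ 2).

Lemma glued_derivable_left s : 0 < s < m -> derivable_pt_lim (glued f P m) s (df s).
Proof.
  intros Hs. apply (derivable_pt_lim_local f); [apply f_deriv; auto|].
  exists (Rmin s (m - s)). split; [apply Rmin_pos; lra|].
  intros y Hy. pose proof (Rmin_r s (m - s)). apply Rabs_def2 in Hy.
  unfold glued. destruct (Rlt_dec y m); [auto|lra].
Qed.

Lemma glued_derivable_junction : derivable_pt_lim (glued f P m) m (dP 0).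
Proof.
  apply derivable_pt_lim_of_little_o. intros eps Heps.
  destruct (f_left_taylor eps Heps) as (e & He & Hleft).
  assert (Hq : 0 < eps / (K + 1)) by (apply Rdiv_lt_0_compat; lra).
  exists (Rmin e (Rmin d (eps / (K + 1)))). split; [repeat apply Rmin_pos; auto|].
  intros h Hh0 Hh.
  pose proof (Rmin_l e (Rmin d (eps / (K + 1)))). pose proof (Rmin_r e (Rmin d (eps / (K + 1)))).
  pose proof (Rmin_l d (eps / (K + 1))). pose proof (Rmin_r d (eps / (K + 1))).
  apply Rabs_def2 in Hh as Hh'.
  unfold glued. destruct (Rlt_dec m m) as [|_]; [lra|]. rewrite Rminus_diag.
  destruct (Rlt_dec (m + h) m) as [Hl|Hr]; [apply Hleft; lra|].
  replace (m + h - m) with h by ring.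
  assert (h > 0) by (destruct (Rtotal_order h 0) as [|[|]]; lra).
  specialize (P_taylor 0 h ltac:(lra) ltac:(lra)). rewrite Rminus_0_r in P_taylor.
  eapply Rle_trans; [apply P_taylor|]. apply quadratic_le_eps; auto. lra.
Qed.

Lemma glued_derivable_right s : m < s < m + d -> derivable_pt_lim (glued f P m) s (dP (s - m)).
Proof.
  intros Hs. apply derivable_pt_lim_of_little_o. intros eps Heps.
  assert (Hq : 0 < eps / (K + 1)) by (apply Rdiv_lt_0_compat; lra).
  exists (Rmin (s - m) (Rmin (m + d - s) (eps / (K + 1)))).
  split; [apply Rmin_pos; [lra|apply Rmin_pos; lra]|].
  intros h Hh0 Hh.
  pose proof (Rmin_l (s - m) (Rmin (m + d - s) (eps / (K + 1)))).
  pose proof (Rmin_r (s - m) (Rmin (m + d - s) (eps / (K + 1)))).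
  pose proof (Rmin_l (m + d - s) (eps / (K + 1))). pose proof (Rmin_r (m + d - s) (eps / (K + 1))).
  apply Rabs_def2 in Hh as Hh'.
  unfold glued. destruct (Rlt_dec s m) as [|_]; [lra|]. destruct (Rlt_dec (s + h) m) as [|_]; [lra|].
  specialize (P_taylor (s - m) (s + h - m) ltac:(lra) ltac:(lra)).
  replace (s + h - m - (s - m)) with h in P_taylor by ring.
  eapply Rle_trans; [apply P_taylor|]. apply quadratic_le_eps; auto. lra.
Qed.

Lemma glued_derivable s : 0 < s < m + d ->
  derivable_pt_lim (glued f P m) s (if Rlt_dec s m then df s else dP (s - m)).
Proof.
  intros Hs. destruct (Rlt_dec s m) as [Hl|Hr].
  - apply glued_derivable_left. lra.
  - destruct (Req_dec s m) as [->|Hne].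
    + rewrite Rminus_diag. apply glued_derivable_junction.
    + apply glued_derivable_right. lra.
Qed.

End Glue.

Lemma in_dom_Some m s : in_dom (Some m) s <-> 0 < s < m.
Proof. unfold in_dom. tauto. Qed.

Lemma picard_step_size M L k : 0 <= M -> 0 <= L -> 0 < k ->
  exists d, 0 < d /\ M * d <= k /\ L * d <= / 2.
Proof.
  intros HM HL Hk. exists (Rmin (k / (M + 1)) (/ (2 * (L + 1)))).
  pose proof (Rmin_l (k / (M + 1)) (/ (2 * (L + 1)))).
  pose proof (Rmin_r (k / (M + 1)) (/ (2 * (L + 1)))).
  assert (H1 : 0 < k / (M + 1)) by (apply Rdiv_lt_0_compat; lra).
  assert (H2 : 0 < / (2 * (L + 1))) by (apply Rinv_0_lt_compat; lra).
  pose proof (Rmin_pos _ _ H1 H2).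
  split; [auto|split].
  - apply Rle_trans with ((M + 1) * (k / (M + 1))); [|right; field; lra].
    apply Rmult_le_compat; lra.
  - apply Rle_trans with ((L + 1) * / (2 * (L + 1))); [|right; field; lra].
    apply Rmult_le_compat; lra.
Qed.

Lemma toy_local_solution g beta a0 b0 : condG g -> Rabs a0 < 1 -> 0 < b0 ->
  exists d K (P Q : R -> R), 0 < d /\ 0 <= K /\ P 0 = a0 /\ Q 0 = b0 /\
    (forall t, -1 < P t < 1 /\ 0 < Q t) /\
    forall x y, 0 <= x <= d -> 0 <= y <= d ->
      Rabs (P y - P x - (y - x) * toyF g beta (P x) (Q x)) <= K * (y - x) ^ 2 /\
      Rabs (Q y - Q x - (y - x) * P x) <= K * (y - x) ^ 2.
Proof.
  intros HG Ha Hb. set (k := toy_box_radius a0 b0).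
  assert (Hk : 0 < k) by (apply toy_box_radius_pos; auto).
  destruct (box_regular_pair _ _ a0 b0 k (toyF_box_regular a0 b0 Ha Hb g beta HG)
              (box_regular_fst a0 b0 k)) as (M & L & HM & HL & B1 & B2).
  destruct (picard_step_size M L k HM HL Hk) as (d & Hd & HMd & HLd).
  destruct (picard_local_solution (toyF g beta) (fun p _ => p) a0 b0 k M L d HM HL
              (Rlt_le _ _ Hd) (Rlt_le _ _ Hk) HMd HLd B1 B2) as (P & Q & HP0 & HQ0 & Hbox & Htaylor).
  exists d, (L * M), P, Q. repeat split; auto.
  - apply Rmult_le_pos; auto.
  - destruct (Hbox t). apply (toy_box_in_M0 a0 b0 Ha Hb _ (Q t)); auto.
  - destruct (Hbox t). apply (toy_box_in_M0 a0 b0 Ha Hb _ (Q t)); auto.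
  - destruct (Hbox t). apply (toy_box_in_M0 a0 b0 Ha Hb (P t)); auto.
  - apply Htaylor; auto.
  - apply Htaylor; auto.
Qed.

Section FiniteEnd.

Variables (g : R -> R) (beta : R) (rho r : R -> R) (m : R).
Hypotheses (HG : condG g) (Hsol : toy_solution g beta rho r (Some m)) (m_pos : 0 < m)
  (Hgood : forall s, in_dom (Some m) s -> toy_decreasing_at g beta rho r s).

Lemma toy_left_limits : exists rm qm, Rabs rm < 1 /\ 0 < qm /\
  left_lim rho m rm /\ left_lim r m qm /\
  left_lim (fun s => toyF g beta (rho s) (r s)) m (toyF g beta rm qm).
Proof.
  assert (Hmono := toy_decreasing_monotone g beta rho r (Some m) Hsol Hgood).
  assert (Hin : forall s, 0 < s < m -> (-1 < rho s < 1 /\ 0 < r s) /\ 0 < rho s).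
  { intros s Hs. destruct (Hsol s (proj2 (in_dom_Some m s) Hs)) as (H1 & H2 & _).
    destruct (Hgood s (proj2 (in_dom_Some m s) Hs)). tauto. }
  assert (Hr_step : forall x y, 0 < x -> x < y -> y < m -> 0 < r y - r x <= y - x).
  { intros x y Hx Hxy Hy. destruct (Hmono x y Hx Hxy (proj2 (in_dom_Some m y) ltac:(lra)))
      as (_ & c & Hc & Hrc & ->). nra. }
  destruct (decreasing_left_lim rho m 0 m_pos) as (rm & Hrm0 & Hrm1 & Hrm).
  { intros x y Hx Hxy Hy. apply (Hmono x y Hx Hxy). apply in_dom_Some. lra. }
  { intros s Hs. destruct (Hin s Hs). lra. }
  destruct (increasing_left_lim r m (r (m / 2) + m) m_pos) as (qm & _ & Hqm1 & Hqm).
  { intros x y Hx Hxy Hy. pose proof (Hr_step x y Hx Hxy Hy). lra. }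
  { intros s Hs. destruct (Rlt_le_dec (m / 2) s) as [Hl|Hl].
    - pose proof (Hr_step (m / 2) s ltac:(lra) Hl ltac:(lra)). lra.
    - destruct (Req_dec s (m / 2)) as [->|Hne]; [lra|].
      pose proof (Hr_step s (m / 2) ltac:(lra) ltac:(lra) ltac:(lra)). destruct (Hin s Hs). lra. }
  pose proof (Hrm1 (m / 2) ltac:(lra)). pose proof (Hqm1 (m / 2) ltac:(lra)).
  destruct (Hin (m / 2) ltac:(lra)) as [[_ Hr2] _].
  assert (Hrm_abs : Rabs rm < 1) by (apply Rabs_def1; destruct (Hin (m / 2) ltac:(lra)); lra).
  exists rm, qm. repeat split; auto; [lra|].
  intros eps Heps.
  destruct (toyF_continuous g beta rm qm HG Hrm_abs ltac:(lra) eps Heps) as (e & He & Hc).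
  destruct (Hrm e He) as (d1 & Hd1 & H1). destruct (Hqm e He) as (d2 & Hd2 & H2).
  exists (Rmin d1 d2). split; [apply Rmin_pos; auto|].
  intros s Hs. pose proof (Rmin_l d1 d2). pose proof (Rmin_r d1 d2).
  apply Hc; [apply H1|apply H2]; lra.
Qed.

Lemma toy_solution_glued rm qm d K P Q : 0 < d -> 0 <= K ->
  left_lim rho m rm -> left_lim r m qm ->
  left_lim (fun s => toyF g beta (rho s) (r s)) m (toyF g beta rm qm) ->
  P 0 = rm -> Q 0 = qm -> (forall t, -1 < P t < 1 /\ 0 < Q t) ->
  (forall x y, 0 <= x <= d -> 0 <= y <= d ->
     Rabs (P y - P x - (y - x) * toyF g beta (P x) (Q x)) <= K * (y - x) ^ 2 /\
     Rabs (Q y - Q x - (y - x) * P x) <= K * (y - x) ^ 2) ->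
  toy_solution g beta (glued rho P m) (glued r Q m) (Some (m + d)).
Proof.
  intros Hd HK Hrm Hqm HF HP0 HQ0 HPQ Htaylor s Hs. rewrite in_dom_Some in Hs.
  set (Fs := fun s => toyF g beta (rho s) (r s)).
  assert (Hderiv : forall c, 0 < c < m ->
    derivable_pt_lim rho c (Fs c) /\ derivable_pt_lim r c (rho c)).
  { intros c Hc. destruct (Hsol c (proj2 (in_dom_Some m c) Hc)) as (_ & _ & H1 & H2). auto. }
  assert (Hval : toyF g beta (glued rho P m s) (glued r Q m s) =
                 if Rlt_dec s m then Fs s else toyF g beta (P (s - m)) (Q (s - m))).
  { unfold glued, Fs. destruct (Rlt_dec s m); auto. }
  assert (Hval2 : glued rho P m s = if Rlt_dec s m then rho s else P (s - m)).
  { unfold glued. destruct (Rlt_dec s m); auto. }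
  split; [|split; [|split]].
  - unfold glued. destruct (Rlt_dec s m); [|apply HPQ].
    destruct (Hsol s (proj2 (in_dom_Some m s) ltac:(lra))). tauto.
  - unfold glued. destruct (Rlt_dec s m); [|apply HPQ].
    destruct (Hsol s (proj2 (in_dom_Some m s) ltac:(lra))). tauto.
  - rewrite Hval.
    apply (glued_derivable rho Fs P (fun x => toyF g beta (P x) (Q x)) m d K); auto.
    + intros c Hc. apply Hderiv; auto.
    + rewrite HP0, HQ0. apply (left_lim_taylor rho Fs); auto. intros c Hc. apply Hderiv; auto.
    + intros x y Hx Hy. apply Htaylor; auto.
  - rewrite Hval2. apply (glued_derivable r rho Q P m d K); auto.
    + intros c Hc. apply Hderiv; auto.
    + rewrite HQ0, HP0. apply (left_lim_taylor r rho); auto. intros c Hc. apply Hderiv; auto.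
    + intros x y Hx Hy. apply Htaylor; auto.
Qed.

End FiniteEnd.

Lemma toy_tip_solution_extend g beta rho r rho2 r2 m m2 : m <= m2 ->
  toy_tip_solution g beta rho r (Some m) -> toy_solution g beta rho2 r2 (Some m2) ->
  (forall s, s < m -> rho2 s = rho s /\ r2 s = r s) -> toy_tip_solution g beta rho2 r2 (Some m2).
Proof.
  intros Hm (_ & (A1 & A2 & eta & Heta & A3) & (s0 & Hs0 & G & HGa & HGp & HGe) & (sa & Hsa & Htip))
    Hsol2 Heq.
  rewrite in_dom_Some in Hs0. rewrite in_dom_Some in Hsa.
  assert (Hnear0 : forall f f2 : R -> R, (forall s, s < m -> f2 s = f s) -> forall L,
    lim_0plus f L -> lim_0plus f2 L).
  { intros f f2 Hf L Hlim eps Heps. destruct (Hlim eps Heps) as (d & Hd & H).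
    exists (Rmin d m). split; [apply Rmin_pos; lra|].
    intros s Hs. pose proof (Rmin_l d m). pose proof (Rmin_r d m). rewrite Hf by lra. apply H. lra. }
  split; [auto|split; [|split]].
  - split; [|split].
    + apply (Hnear0 rho); auto. intros s Hs. apply Heq; auto.
    + apply (Hnear0 r); auto. intros s Hs. apply Heq; auto.
    + exists eta. split; auto. apply (Hnear0 (fun s => sqrt (1 - rho s ^ 2) / r s)); auto.
      intros s Hs. destruct (Heq s Hs) as [-> ->]. auto.
  - exists s0. split; [apply in_dom_Some; lra|]. cbv zeta.
    destruct (Heq s0 ltac:(lra)) as [_ ->]. exists G. split; auto. split; auto.
    intros s Hs. destruct (Heq s ltac:(lra)) as [-> ->]. apply HGe. auto.
  - exists sa. split; [apply in_dom_Some; lra|].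
    intros s Hs. destruct (Htip s Hs) as ((l & Hl & Hl0) & Hr).
    destruct (Heq s ltac:(lra)) as [-> _]. split; auto.
    exists l. split; auto. apply (derivable_pt_lim_local rho); auto.
    exists (Rmin s (m - s)). split; [apply Rmin_pos; lra|].
    intros y Hy. pose proof (Rmin_r s (m - s)). apply Rabs_def2 in Hy. apply Heq. lra.
Qed.

Lemma toy_decreasing_finite_smax_absurd g beta rho r m : condG g ->
  maximal_toy_tip_solution g beta rho r (Some m) ->
  (forall s, in_dom (Some m) s -> toy_decreasing_at g beta rho r s) -> False.
Proof.
  intros HG [Htip Hmax] Hgood. pose proof Htip as (Hsol & _ & _ & sa & Hsa & _).
  assert (Hm : 0 < m) by (rewrite in_dom_Some in Hsa; lra).
  destruct (toy_left_limits g beta rho r m HG Hsol Hm Hgood)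
    as (rm & qm & Hrm & Hqm & Lrho & Lr & LF).
  destruct (toy_local_solution g beta rm qm HG Hrm Hqm)
    as (d & K & P & Q & Hd & HK & HP0 & HQ0 & HPQ & Htaylor).
  assert (Heq : forall s, s < m -> glued rho P m s = rho s /\ glued r Q m s = r s).
  { intros s Hs. unfold glued. destruct (Rlt_dec s m); [auto|lra]. }
  assert (Htip2 : toy_tip_solution g beta (glued rho P m) (glued r Q m) (Some (m + d))).
  { apply (toy_tip_solution_extend g beta rho r _ _ m); auto; [lra|].
    apply (toy_solution_glued g beta rho r m Hsol Hm rm qm d K); auto. }
  assert (Hm_in : in_dom (Some m) m).
  { apply (Hmax _ _ _ Htip2); [|apply in_dom_Some; lra].
    intros s Hs. rewrite in_dom_Some in Hs. destruct (Heq s ltac:(lra)) as [-> ->].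
    split; [apply in_dom_Some; lra|auto]. }
  rewrite in_dom_Some in Hm_in. lra.
Qed.

(* The bracket of toyF must be negative, and sqrt (1 - p^2) >= sqrt (1 - rho0^2). *)
Lemma toyF_neg_growth_bound g beta p q rho0 : 0 < beta -> 0 < g (q ^ 2) -> 0 < p <= rho0 ->
  rho0 < 1 -> 0 < q -> toyF g beta p q < 0 -> q * g (q ^ 2) < / (beta * sqrt (1 - rho0 ^ 2)).
Proof.
  intros Hb HG Hp Hrho0 Hq Hneg. unfold toyF in Hneg.
  set (S := sqrt (1 - p ^ 2)) in Hneg. set (S0 := sqrt (1 - rho0 ^ 2)).
  assert (HS0 : 0 < S0) by (apply sqrt_lt_R0; nra).
  assert (HS : S0 <= S) by (apply sqrt_le_1_alt; nra).
  assert (HA : 0 < 3 / 2 * (1 - p ^ 2) / q) by (apply Rdiv_lt_0_compat; nra).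
  assert (Hbracket : S * (beta * q ^ 2 * g (q ^ 2) + p) < q).
  { destruct (Rlt_dec (S * (beta * q ^ 2 * g (q ^ 2) + p)) q) as [|Hge]; auto. exfalso.
    assert (0 <= -1 + S * (beta * q ^ 2 * g (q ^ 2) + p) / q).
    { apply (Rmult_le_reg_r q); [auto|]. rewrite Rmult_0_l. unfold Rdiv.
      replace ((-1 + S * (beta * q ^ 2 * g (q ^ 2) + p) * / q) * q)
        with (S * (beta * q ^ 2 * g (q ^ 2) + p) - q) by (field; lra). lra. }
    pose proof (Rmult_le_pos _ _ (Rlt_le _ _ HA) H). lra. }
  assert (Hlin : beta * S0 * q * g (q ^ 2) < 1).
  { apply (Rmult_lt_reg_r q); [auto|].
    assert (Hw : 0 < beta * q ^ 2 * g (q ^ 2)).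
    { apply Rmult_lt_0_compat; [apply Rmult_lt_0_compat; [auto|apply pow_lt; auto]|auto]. }
    pose proof (Rmult_le_compat_r _ _ _ (Rlt_le _ _ Hw) HS).
    assert (0 <= S * p) by (apply Rmult_le_pos; lra).
    replace (beta * S0 * q * g (q ^ 2) * q) with (S0 * (beta * q ^ 2 * g (q ^ 2))) by ring.
    nra. }
  apply (Rmult_lt_reg_l (beta * S0)); [nra|]. rewrite Rinv_r by nra. lra.
Qed.

Section InfiniteTime.

Variables (g : R -> R) (beta : R) (rho r : R -> R).
Hypotheses (HG : condG g) (beta_pos : 0 < beta) (Hsol : toy_solution g beta rho r None)
  (Hgood : forall s, in_dom None s -> toy_decreasing_at g beta rho r s).

Let Hmono := toy_decreasing_monotone g beta rho r None Hsol Hgood.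

Lemma toy_r_increasing x y : 0 < x -> x < y -> r x < r y.
Proof.
  intros Hx Hxy. destruct (Hmono x y Hx Hxy) as (_ & c & _ & Hc & Hr); [split; [lra|exact I]|].
  nra.
Qed.

Lemma toy_r_bounded : exists B, forall s, 0 < s -> r s <= B.
Proof.
  destruct (Hgood 1 ltac:(split; [lra|exact I])) as [_ Hrho1].
  destruct (Hsol 1 ltac:(split; [lra|exact I])) as [[_ Hrho1'] _].
  destruct HG as (Hgpos & _ & _ & Hgrowth).
  destruct (Hgrowth (/ (beta * sqrt (1 - rho 1 ^ 2)))) as [V HV].
  exists (Rmax V (r 1)). intros s Hs. destruct (Rle_dec 1 s) as [H1|H1].
  - apply Rle_trans with V; [|apply Rmax_l].
    destruct (Rle_dec (r s) V) as [|Hbig]; auto. exfalso.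
    destruct (Hgood s ltac:(split; [lra|exact I])) as [Hneg Hrho].
    destruct (Hsol s ltac:(split; [lra|exact I])) as (_ & Hr & _).
    assert (rho s <= rho 1).
    { destruct (Req_dec s 1) as [->|Hne]; [lra|]. left.
      apply (Hmono 1 s); [lra|lra|split; [lra|exact I]]. }
    pose proof (toyF_neg_growth_bound g beta (rho s) (r s) (rho 1) beta_pos
                  (Hgpos _ (pow_lt _ 2 Hr)) ltac:(lra) Hrho1' Hr Hneg).
    specialize (HV (r s) ltac:(lra)). lra.
  - apply Rle_trans with (r 1); [|apply Rmax_r].
    destruct (Req_dec s 1) as [->|Hne]; [lra|]. left. apply toy_r_increasing; lra.
Qed.

(* rho decreases to some rho_inf >= 0; r' = rho >= rho_inf and the bound on r force rho_inf = 0. *)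
Lemma toy_steady_limits : S4 rho r.
Proof.
  destruct toy_r_bounded as [B HB].
  destruct (decreasing_lim_infty rho 0) as (Lr & HL0 & HL1 & HLlim).
  { intros x y Hx Hxy. apply (Hmono x y Hx Hxy). split; [lra|exact I]. }
  { intros s Hs. destruct (Hgood s ltac:(split; [lra|exact I])). lra. }
  destruct (increasing_lim_infty r B) as (rinf & _ & Hri1 & Hrlim); auto.
  { apply toy_r_increasing. }
  assert (HLr : Lr = 0).
  { destruct HL0 as [Hpos|]; auto. exfalso.
    set (s := 2 + (B - r 1) / Lr).
    assert (HB1 : r 1 <= B) by (apply HB; lra).
    assert (Hs : 1 < s) by (unfold s; pose proof (Rdiv_le_0_compat (B - r 1) Lr ltac:(lra) Hpos); lra).
    destruct (Hmono 1 s ltac:(lra) Hs ltac:(split; [lra|exact I])) as (_ & c & Hc & _ & E).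
    pose proof (HL1 c ltac:(lra)). pose proof (HB s ltac:(lra)).
    assert (Lr * (s - 1) <= rho c * (s - 1)) by (apply Rmult_le_compat_r; lra).
    assert (Lr * (s - 1) = Lr + (B - r 1)) by (unfold s; field; lra).
    lra. }
  subst Lr. split; auto. exists rinf. split; auto.
  pose proof (Hri1 1 ltac:(lra)). destruct (Hsol 1 ltac:(split; [lra|exact I])) as (_ & Hr1 & _). lra.
Qed.

End InfiniteTime.

Theorem lemma3p4 (g : R -> R) :
  analytic_on (fun _ => True) g ->
  condG g ->
  (exists beta0, in_X_toy g beta0) ->
  forall beta, in_X_toy g beta ->
  forall rho r smax, maximal_toy_tip_solution g beta rho r smax ->
    toy_steady_tip_growth g beta rho r smax.
Proof.
  intros _ HG _ beta [Hb HX] rho r smax Hmax.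
  destruct (HX rho r smax Hmax) as [HnA HnB].
  pose proof Hmax as ((Hsol & HS1 & HS2 & Htip) & _).
  pose proof (toy_decreasing_everywhere g beta rho r smax HG Hsol Htip HnA HnB) as Hgood.
  destruct smax as [m|].
  - exfalso. apply (toy_decreasing_finite_smax_absurd g beta rho r m HG Hmax Hgood).
  - split; [auto|split; [auto|split; [auto|split]]].
    + split; auto. intros s Hs.
      assert (Hd : in_dom None s) by (split; [auto|exact I]).
      destruct (Hgood s Hd) as [Hneg Hpos]. split; auto.
      exists (toyF g beta (rho s) (r s)). split; auto. apply (Hsol s Hd).
    + apply (toy_steady_limits g beta rho r HG Hb Hsol Hgood).
Qed.
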